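(* Assume $1<\mathscr{G}<2$ and $\rho\mapsto c(\rho)/\rho$ integrable at $0$. Let $w$ be a $C^2$ solution of (R) on $[0,\mathcal{T})\times(0,\infty)$, let $0\le\alpha<T<\mathcal{T}$, $R>0$, and let $X_1,X_2$ be the characteristics through $(\alpha,R)$, defined on $[\alpha,T]$. With $h,k,\Phi,\Psi$ the choice of the context, set $A_j=\max_{[\alpha,T]}|\bar a_j(w(t,X_1(t)))|$, $B_j=\max_{[\alpha,T]}|\bar b_j(w(t,X_2(t)))|$ for $j=0,1,2$ (with $\bar a_0=a_0$, $\bar b_0=b_0$), assumed positive, and $K_a(\theta)=\int_\alpha^\theta|a_2(t,X_1(t))|dt\cdot\exp\int_\alpha^\theta|a_1(t,X_1(t))|dt$, $K_b(\theta)=\int_\alpha^\theta|b_2(t,X_2(t))|dt\cdot\exp\int_\alpha^\theta|b_1(t,X_2(t))|dt$. For $\zeta_0,\zeta_1,\zeta_2>0$ let $x(\zeta_0,\zeta_1,\zeta_2)$ be the unique positive solution of $Q(x)=\zeta_1/\sqrt{\zeta_0\zeta_2}$, with $Q(x)=xe^x$. Then: (1) If $v_1(\alpha,R)\ge0$, then for all $t\in[\alpha,T]$ with $t<\alpha+\frac{x(A_0,A_1,A_2)}{A_1}\min_{[\alpha,T]}X_1$, $$\frac{-K_a(t)}{1-K_a(t)\int_\alpha^t|a_0(\tau,X_1(\tau))|e^{\int_\alpha^\tau|a_1(s,X_1(s))|ds}d\tau}\le v_1(t,X_1(t))e^{-\int_\alpha^ta_1(s,X_1(s))ds}\le v_1(\alpha,R)+K_a(t).$$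 (2) If $v_2(\alpha,R)\ge0$, then for all $t\in[\alpha,T]$ with $t<\alpha+\frac{x(B_0,B_1,B_2)}{B_1}\min_{[\alpha,T]}X_2$, $$\frac{-K_b(t)}{1-K_b(t)\int_\alpha^t|b_0(\tau,X_2(\tau))|e^{\int_\alpha^\tau|b_1(s,X_2(s))|ds}d\tau}\le v_2(t,X_2(t))e^{-\int_\alpha^tb_1(s,X_2(s))ds}\le v_2(\alpha,R)+K_b(t).$$
   Context: System (R): $\partial_tw_1+\lambda_1(w)\partial_rw_1=f$, $\partial_tw_2+\lambda_2(w)\partial_rw_2=-f$, with $w_1=u-H(\rho)$, $w_2=u+H(\rho)$, $H(\rho)=\int_0^\rho c(s)/s\,ds$, $c=\sqrt{p'}$, $\lambda_{1,2}=u\mp c$, $f=\frac{(d-1)uc}r$, $\mathscr{G}=\frac1c\frac{d(\rho c)}{d\rho}$; characteristics $X_i'=\lambda_i(w(t,X_i(t)))$. Choice: $h=k=\frac12\ln H'(\rho)$, $\Phi=\phi(w)/r$, $\Psi=\psi(w)/r$ satisfying $\partial_2(e^h\Phi)=\frac{-e^h\partial_2f}{\lambda_1-\lambda_2}$, $\partial_1(e^k\Psi)=\frac{e^k\partial_1f}{\lambda_2-\lambda_1}$ ($\partial_i=\partial/\partial w_i$); $v_1=e^h(\partial_rw_1+\Phi)$, $v_2=e^k(\partial_rw_2+\Psi)$; $a_0=-e^{-h}\partial_1\lambda_1$, $a_1=\partial_1f+2\Phi\partial_1\lambda_1+(\partial_1h-\partial_2h)f$, $a_2=e^h(\partial_rf-\Phi\partial_1f-\Phi^2\partial_1\lambda_1+(\partial_1\Phi-\partial_2\Phi)f+\lambda_1\partial_r\Phi)$,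 and $b_0=-e^{-k}\partial_2\lambda_2$, $b_1=-\partial_2f+2\partial_2\lambda_2\Psi+(\partial_1k-\partial_2k)f$, $b_2=e^k(-\partial_rf+\partial_2f\Psi-\partial_2\lambda_2\Psi^2+\lambda_2\partial_r\Psi+(\partial_1\Psi-\partial_2\Psi)f)$. For this choice $a_0,b_0$ do not depend on $r$ and $a_i=\bar a_i(w)/r^i$, $b_i=\bar b_i(w)/r^i$ ($i=1,2$); $v_1,v_2$ satisfy $\partial_tv_1+\lambda_1\partial_rv_1=a_0v_1^2+a_1v_1+a_2$, $\partial_tv_2+\lambda_2\partial_rv_2=b_0v_2^2+b_1v_2+b_2$. *)

From Stdlib Require Import Reals Lra ClassicalEpsilon.
Open Scope R_scope.

Definition Der (g : R -> R) (x : R) : R :=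
  epsilon (inhabits 0) (fun l => derivable_pt_lim g x l).

Definition D1 (F : R -> R -> R) (a b : R) : R := Der (fun s => F s b) a.
Definition D2 (F : R -> R -> R) (a b : R) : R := Der (fun s => F a s) b.

Definition Int (f : R -> R) (a b : R) : R :=
  epsilon (inhabits 0)
    (fun I => exists pr : Riemann_integrable f a b, RiemannInt pr = I).

(* Derivative of g at x relative to the set S (one-sided at endpoints). *)
Definition has_deriv_within (S : R -> Prop) (g : R -> R) (x l : R) : Prop :=
  forall eps, 0 < eps -> exists delta, 0 < delta /\
    forall y, S y -> y <> x -> Rabs (y - x) < delta ->
      Rabs ((g y - g x) / (y - x) - l) < eps.

Definition cont2_within (S : R -> R -> Prop) (F : R -> R -> R) (x y : R) : Prop :=
  forall eps, 0 < eps -> exists delta, 0 < delta /\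
    forall x' y', S x' y' -> Rabs (x' - x) < delta -> Rabs (y' - y) < delta ->
      Rabs (F x' y' - F x y) < eps.

Definition partials_on (S : R -> R -> Prop) (F Fx Fy : R -> R -> R) : Prop :=
  forall x y, S x y ->
    has_deriv_within (fun s => S s y) (fun s => F s y) x (Fx x y) /\
    has_deriv_within (fun s => S x s) (fun s => F x s) y (Fy x y) /\
    cont2_within S F x y.

Definition C1_on (S : R -> R -> Prop) (F : R -> R -> R) : Prop :=
  exists Fx Fy, partials_on S F Fx Fy /\
    (forall x y, S x y -> cont2_within S Fx x y /\ cont2_within S Fy x y).

Definition C2_on (S : R -> R -> Prop) (F : R -> R -> R) : Prop :=
  exists Fx Fy, partials_on S F Fx Fy /\ C1_on S Fx /\ C1_on S Fy.

Definition is_max_on (g : R -> R) (a b M : R) : Prop :=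
  (forall t, a <= t <= b -> g t <= M) /\ exists t, a <= t <= b /\ g t = M.
Definition is_min_on (g : R -> R) (a b m : R) : Prop :=
  (forall t, a <= t <= b -> m <= g t) /\ exists t, a <= t <= b /\ g t = m.

Definition cs (p : R -> R) (rho : R) : R := sqrt (Der p rho).

Definition Gs (p : R -> R) (rho : R) : R :=
  / cs p rho * Der (fun s => s * cs p s) rho.

Definition pressure_ok (p : R -> R) : Prop :=
  forall rho, 0 < rho ->
    (exists l, derivable_pt_lim p rho l) /\
    0 < Der p rho /\
    (exists l, derivable_pt_lim (Der p) rho l) /\
    continuity_pt (Der (Der p)) rho.

(* H(rho) = int_0^rho c(s)/s ds : H' = c/rho on (0,oo), H(0+) = 0 = H(0).
   The existence of such an H is exactly integrability of c/rho at 0. *)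
Definition H_is_primitive (p H : R -> R) : Prop :=
  H 0 = 0 /\
  (forall eps, 0 < eps -> exists delta, 0 < delta /\
     forall rho, 0 < rho < delta -> Rabs (H rho) < eps) /\
  (forall rho, 0 < rho -> derivable_pt_lim H rho (cs p rho / rho)).

(* states (w1,w2) with positive density *)
Definition Wdom (H : R -> R) (a b : R) : Prop :=
  exists rho, 0 < rho /\ H rho = (b - a) / 2.

(* density and velocity as functions of the Riemann invariants *)
Definition rhoW (H : R -> R) (a b : R) : R :=
  epsilon (inhabits 0) (fun rho => 0 < rho /\ H rho = (b - a) / 2).
Definition uW (a b : R) : R := (a + b) / 2.

Definition lam1 (p H : R -> R) (a b : R) : R := uW a b - cs p (rhoW H a b).
Definition lam2 (p H : R -> R) (a b : R) : R := uW a b + cs p (rhoW H a b).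

Definition fw (p H : R -> R) (d : nat) (r a b : R) : R :=
  (INR d - 1) * uW a b * cs p (rhoW H a b) / r.

(* h = k = (1/2) ln H'(rho) *)
Definition hW (p H : R -> R) (a b : R) : R := ln (Der H (rhoW H a b)) / 2.

(* Phi = phi(w)/r must satisfy d_2(e^h Phi) = - e^h d_2 f / (lam1 - lam2) *)
Definition phi_ok (p H : R -> R) (d : nat) (phi : R -> R -> R) : Prop :=
  C1_on (Wdom H) phi /\
  forall r a b, 0 < r -> Wdom H a b ->
    D2 (fun x y => exp (hW p H x y) * (phi x y / r)) a b =
    - exp (hW p H a b) * D2 (fw p H d r) a b / (lam1 p H a b - lam2 p H a b).

(* Psi = psi(w)/r must satisfy d_1(e^k Psi) = e^k d_1 f / (lam2 - lam1) *)
Definition psi_ok (p H : R -> R) (d : nat) (psi : R -> R -> R) : Prop :=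
  C1_on (Wdom H) psi /\
  forall r a b, 0 < r -> Wdom H a b ->
    D1 (fun x y => exp (hW p H x y) * (psi x y / r)) a b =
    exp (hW p H a b) * D1 (fw p H d r) a b / (lam2 p H a b - lam1 p H a b).

Definition a0W (p H : R -> R) (a b : R) : R :=
  - exp (- hW p H a b) * D1 (lam1 p H) a b.
Definition a1W (p H : R -> R) (d : nat) (phi : R -> R -> R) (r a b : R) : R :=
  D1 (fw p H d r) a b + 2 * (phi a b / r) * D1 (lam1 p H) a b
  + (D1 (hW p H) a b - D2 (hW p H) a b) * fw p H d r a b.
Definition a2W (p H : R -> R) (d : nat) (phi : R -> R -> R) (r a b : R) : R :=
  exp (hW p H a b) *
   ( Der (fun s => fw p H d s a b) r
     - (phi a b / r) * D1 (fw p H d r) a b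
     - (phi a b / r) ^ 2 * D1 (lam1 p H) a b
     + (D1 (fun x y => phi x y / r) a b - D2 (fun x y => phi x y / r) a b)
         * fw p H d r a b
     + lam1 p H a b * Der (fun s => phi a b / s) r ).

Definition b0W (p H : R -> R) (a b : R) : R :=
  - exp (- hW p H a b) * D2 (lam2 p H) a b.
Definition b1W (p H : R -> R) (d : nat) (psi : R -> R -> R) (r a b : R) : R :=
  - D2 (fw p H d r) a b + 2 * D2 (lam2 p H) a b * (psi a b / r)
  + (D1 (hW p H) a b - D2 (hW p H) a b) * fw p H d r a b.
Definition b2W (p H : R -> R) (d : nat) (psi : R -> R -> R) (r a b : R) : R :=
  exp (hW p H a b) *
   ( - Der (fun s => fw p H d s a b) r
     + D2 (fw p H d r) a b * (psi a b / r)
     - D2 (lam2 p H) a b * (psi a b / r) ^ 2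
     + lam2 p H a b * Der (fun s => psi a b / s) r
     + (D1 (fun x y => psi x y / r) a b - D2 (fun x y => psi x y / r) a b)
         * fw p H d r a b ).

Definition Omega (Tcal : R) (t r : R) : Prop := 0 <= t < Tcal /\ 0 < r.

Definition is_solution (p H : R -> R) (d : nat) (Tcal : R)
    (w1 w2 : R -> R -> R) : Prop :=
  C2_on (Omega Tcal) w1 /\ C2_on (Omega Tcal) w2 /\
  (forall t r, Omega Tcal t r -> Wdom H (w1 t r) (w2 t r)) /\
  (forall t r, Omega Tcal t r ->
     exists d1t d1r d2t d2r,
       has_deriv_within (fun s => Omega Tcal s r) (fun s => w1 s r) t d1t /\
       has_deriv_within (fun s => Omega Tcal t s) (fun s => w1 t s) r d1r /\
       has_deriv_within (fun s => Omega Tcal s r) (fun s => w2 s r) t d2t /\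
       has_deriv_within (fun s => Omega Tcal t s) (fun s => w2 t s) r d2r /\
       d1t + lam1 p H (w1 t r) (w2 t r) * d1r = fw p H d r (w1 t r) (w2 t r) /\
       d2t + lam2 p H (w1 t r) (w2 t r) * d2r = - fw p H d r (w1 t r) (w2 t r)).

Definition is_characteristic (lam : R -> R -> R) (w1 w2 : R -> R -> R)
    (alpha T R0 : R) (X : R -> R) : Prop :=
  X alpha = R0 /\
  forall t, alpha <= t <= T ->
    0 < X t /\
    has_deriv_within (fun s => alpha <= s <= T) X t
      (lam (w1 t (X t)) (w2 t (X t))).

Definition v1 (p H : R -> R) (phi : R -> R -> R) (w1 w2 : R -> R -> R)
    (t r : R) : R :=
  exp (hW p H (w1 t r) (w2 t r)) *
    (Der (fun s => w1 t s) r + phi (w1 t r) (w2 t r) / r).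
Definition v2 (p H : R -> R) (psi : R -> R -> R) (w1 w2 : R -> R -> R)
    (t r : R) : R :=
  exp (hW p H (w1 t r) (w2 t r)) *
    (Der (fun s => w2 t s) r + psi (w1 t r) (w2 t r) / r).

Definition Qf (x : R) : R := x * exp x.
Definition xsol (z0 z1 z2 : R) : R :=
  epsilon (inhabits 0) (fun x => 0 < x /\ Qf x = z1 / sqrt (z0 * z2)).

Definition Kf (c2 c1 : R -> R) (alpha theta : R) : R :=
  Int (fun t => Rabs (c2 t)) alpha theta *
  exp (Int (fun t => Rabs (c1 t)) alpha theta).

(* Along the i-th characteristic, V(t) = v_i(t, X_i(t)) solves the
   Riccati equation V' = c0 V^2 + c1 V + c2 with (c0, c1, c2) = (a0, a1, a2)
   or (b0, b1, b2), and c0 <= 0 because G > 1.  For such an equation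
   z = V exp(-int c1) satisfies z' <= |c2| exp(int |c1|), which gives the
   upper bound; comparing z with the barrier B = -P / (1 - K G) gives the
   lower bound as long as K G < 1, and the time restriction
   t < al + x(A0,A1,A2) m / A1 guarantees K G < 1 through Q(x) = x e^x. *)
From Stdlib Require Import Reals Lra ClassicalEpsilon Ranalysis5.
From Coquelicot Require Import Coquelicot.
Open Scope R_scope.

Lemma Der_of_lim g x l : derivable_pt_lim g x l -> Der g x = l.
Proof.
  intro H. unfold Der.
  pose proof (epsilon_spec (inhabits 0) (fun l => derivable_pt_lim g x l) (ex_intro _ l H)) as Hs.
  exact (uniqueness_limite _ _ _ _ Hs H).
Qed.

Lemma deriv_within_interior (S : R -> Prop) g x l e : 0 < e ->
  (forall y, Rabs (y - x) < e -> S y) ->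
  has_deriv_within S g x l -> derivable_pt_lim g x l.
Proof.
  intros He HS H eps Heps.
  destruct (H eps Heps) as [d [Hd Hd']].
  exists (mkposreal (Rmin d e) (Rmin_pos _ _ Hd He)). simpl. intros h Hh0 Hh.
  assert (E: x + h - x = h) by ring.
  specialize (Hd' (x+h)).
  rewrite E in Hd'. apply Hd'.
  - apply HS. rewrite E. eapply Rlt_le_trans; [exact Hh| apply Rmin_r].
  - intro C. apply Hh0. lra.
  - eapply Rlt_le_trans; [exact Hh| apply Rmin_l].
Qed.

Lemma cont2_within_interior (S : R -> R -> Prop) F x y e : 0 < e ->
  (forall u v, Rabs (u - x) < e -> Rabs (v - y) < e -> S u v) ->
  cont2_within S F x y -> continuity_2d_pt F x y.
Proof.
  intros He HS H eps.
  destruct (H eps (cond_pos eps)) as [d [Hd Hd']].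
  exists (mkposreal (Rmin d e) (Rmin_pos _ _ Hd He)). simpl. intros u v Hu Hv.
  apply Hd'.
  - apply HS; eapply Rlt_le_trans; eauto; apply Rmin_r.
  - eapply Rlt_le_trans; [exact Hu| apply Rmin_l].
  - eapply Rlt_le_trans; [exact Hv| apply Rmin_l].
Qed.

Lemma mvt_unordered f f' a b :
  (forall c, Rmin a b <= c <= Rmax a b -> derivable_pt_lim f c (f' c)) ->
  exists c, Rmin a b <= c <= Rmax a b /\ f b - f a = f' c * (b - a).
Proof.
  intros H. destruct (Rtotal_order a b) as [Hab|[Hab|Hab]].
  - destruct (MVT_cor2 f f' a b Hab) as [c [Hc1 Hc2]].
    + intros c Hc; apply H. rewrite Rmin_left, Rmax_right by lra. lra.
    + exists c. rewrite Rmin_left, Rmax_right by lra. split; [lra|auto].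
  - subst. exists b. rewrite Rmin_left, Rmax_left by lra. split; [lra|ring].
  - destruct (MVT_cor2 f f' b a Hab) as [c [Hc1 Hc2]].
    + intros c Hc; apply H. rewrite Rmin_right, Rmax_left by lra. lra.
    + exists c. rewrite Rmin_right, Rmax_left by lra. split; [lra|]. lra.
Qed.

Lemma Rabs_between x u c : Rmin x u <= c <= Rmax x u -> Rabs (c - x) <= Rabs (u - x).
Proof. unfold Rmin, Rmax. destruct (Rle_dec x u); unfold Rabs; repeat destruct Rcase_abs; lra. Qed.

Lemma differentiable_of_cont_partials f fx fy x y e : 0 < e ->
  (forall u v, Rabs (u - x) < e -> Rabs (v - y) < e ->
     derivable_pt_lim (fun s => f s v) u (fx u v) /\
     derivable_pt_lim (fun s => f u s) v (fy u v)) ->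
  continuity_2d_pt fx x y -> continuity_2d_pt fy x y ->
  differentiable_pt_lim f x y (fx x y) (fy x y).
Proof.
  intros He HD Cx Cy eps.
  destruct (Cx (pos_div_2 eps)) as [d1 Hd1]. destruct (Cy (pos_div_2 eps)) as [d2 Hd2].
  assert (Hm : 0 < Rmin e (Rmin d1 d2)).
  { apply Rmin_pos; [lra| apply Rmin_pos; apply cond_pos]. }
  exists (mkposreal _ Hm). simpl. intros u v Hu Hv.
  pose proof (Rmin_l e (Rmin d1 d2)). pose proof (Rmin_r e (Rmin d1 d2)).
  pose proof (Rmin_l d1 d2). pose proof (Rmin_r d1 d2).
  (* f u v - f x y = (f u v - f x v) + (f x v - f x y), each by the MVT *)
  destruct (mvt_unordered (fun s => f s v) (fun s => fx s v) x u) as [c [Hc Ec]].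
  { intros c Hc. apply HD; [|lra]. pose proof (Rabs_between x u c Hc). lra. }
  destruct (mvt_unordered (fun s => f x s) (fun s => fy x s) y v) as [c' [Hc' Ec']].
  { intros c' Hc'. apply HD; [rewrite Rminus_eq_0, Rabs_R0; lra|].
    pose proof (Rabs_between y v c' Hc'). lra. }
  simpl in Ec, Ec'.
  replace (f u v - f x y - (fx x y * (u - x) + fy x y * (v - y)))
    with ((fx c v - fx x y) * (u - x) + (fy x c' - fy x y) * (v - y)) by lra.
  pose proof (Rabs_between x u c Hc) as Hcx. pose proof (Rabs_between y v c' Hc') as Hcy.
  assert (B1 : Rabs (fx c v - fx x y) < pos_div_2 eps) by (apply Hd1; lra).
  assert (B2 : Rabs (fy x c' - fy x y) < pos_div_2 eps)
    by (apply Hd2; [rewrite Rminus_eq_0, Rabs_R0; apply cond_pos|lra]).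
  eapply Rle_trans; [apply Rabs_triang|]. rewrite !Rabs_mult.
  pose proof (Rmax_l (Rabs (u - x)) (Rabs (v - y))). pose proof (Rmax_r (Rabs (u - x)) (Rabs (v - y))).
  simpl in B1, B2.
  assert (Rabs (fx c v - fx x y) * Rabs (u - x) <= eps / 2 * Rmax (Rabs (u - x)) (Rabs (v - y)))
    by (apply Rmult_le_compat; try apply Rabs_pos; lra).
  assert (Rabs (fy x c' - fy x y) * Rabs (v - y) <= eps / 2 * Rmax (Rabs (u - x)) (Rabs (v - y)))
    by (apply Rmult_le_compat; try apply Rabs_pos; lra).
  lra.
Qed.

Lemma inv_close q D e : 0 < D -> 0 < e -> Rabs (q - D) < D / 2 -> Rabs (q - D) < e * D * D / 2 ->
  Rabs (/ q - / D) < e.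
Proof.
  intros D0 He Hq1 Hq2.
  assert (qpos : D / 2 < q) by (unfold Rabs in Hq1; destruct Rcase_abs; lra).
  replace (/ q - / D) with ((D - q) / (q * D)) by (field; lra).
  unfold Rdiv. rewrite Rabs_mult, Rabs_inv. rewrite (Rabs_right (q * D)) by nra.
  replace (Rabs (D - q)) with (Rabs (q - D)) by (unfold Rabs; repeat destruct Rcase_abs; lra).
  apply Rmult_lt_reg_r with (q * D); [nra|]. rewrite Rmult_assoc, Rinv_l by nra.
  assert (e * D * D / 2 <= e * (q * D)).
  { replace (e * (q * D)) with ((e * D) * q) by ring. replace (e * D * D / 2) with ((e * D) * (D / 2)) by field.
    apply Rmult_le_compat_l; [|lra]. apply Rlt_le, Rmult_lt_0_compat; lra. }
  lra.
Qed.

(* Derivative rules stated for explicit functions, so that [apply] can match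
   the shape of the goal. *)
Lemma dlim_eq f x l l' : derivable_pt_lim f x l -> l = l' -> derivable_pt_lim f x l'.
Proof. intros H E; subst; auto. Qed.
Lemma dcomp f g x l1 l2 : derivable_pt_lim f x l1 -> derivable_pt_lim g (f x) l2 ->
  derivable_pt_lim (fun y => g (f y)) x (l2 * l1).
Proof. intros; apply (derivable_pt_lim_comp f g); auto. Qed.
Lemma dmul f g x l1 l2 : derivable_pt_lim f x l1 -> derivable_pt_lim g x l2 ->
  derivable_pt_lim (fun y => f y * g y) x (l1 * g x + f x * l2).
Proof. intros; apply (derivable_pt_lim_mult f g); auto. Qed.
Lemma dadd f g x l1 l2 : derivable_pt_lim f x l1 -> derivable_pt_lim g x l2 ->
  derivable_pt_lim (fun y => f y + g y) x (l1 + l2).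
Proof. intros; apply (derivable_pt_lim_plus f g); auto. Qed.
Lemma dsub f g x l1 l2 : derivable_pt_lim f x l1 -> derivable_pt_lim g x l2 ->
  derivable_pt_lim (fun y => f y - g y) x (l1 - l2).
Proof. intros; apply (derivable_pt_lim_minus f g); auto. Qed.
Lemma dopp f x l : derivable_pt_lim f x l -> derivable_pt_lim (fun y => - f y) x (- l).
Proof. intros; apply (derivable_pt_lim_opp f); auto. Qed.
Lemma dconst c x : derivable_pt_lim (fun _ => c) x 0.
Proof. apply derivable_pt_lim_const. Qed.
Lemma did x : derivable_pt_lim (fun y => y) x 1.
Proof. apply derivable_pt_lim_id. Qed.
Lemma ddiv f g x l1 l2 : g x <> 0 -> derivable_pt_lim f x l1 -> derivable_pt_lim g x l2 ->
  derivable_pt_lim (fun y => f y / g y) x ((l1 * g x - l2 * f x) / (g x) ^ 2).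
Proof.
  intros Hn H1 H2. pose proof (derivable_pt_lim_div f g x l1 l2 H1 H2 Hn) as E.
  eapply dlim_eq; [exact E|]. unfold Rsqr; field; auto.
Qed.
Lemma dexp f x l : derivable_pt_lim f x l ->
  derivable_pt_lim (fun y => exp (f y)) x (exp (f x) * l).
Proof. intro H. apply dcomp; auto. apply derivable_pt_lim_exp. Qed.

Lemma dlim_local f g x l e : 0 < e -> (forall z, Rabs (z - x) < e -> f z = g z) ->
  derivable_pt_lim f x l -> derivable_pt_lim g x l.
Proof.
  intros He H D. apply derivable_pt_lim_locally_ext with f (x - e) (x + e); auto. lra.
  intros z Hz. apply H. unfold Rabs; destruct Rcase_abs; lra.
Qed.

Lemma near_interior a b s z : a < s < b -> Rabs (z - s) < Rmin (s - a) (b - s) -> a < z < b.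
Proof.
  intros Hs Hz. pose proof (Rmin_l (s - a) (b - s)). pose proof (Rmin_r (s - a) (b - s)).
  unfold Rabs in Hz; destruct Rcase_abs; lra.
Qed.

Lemma exp_le_mono x y : x <= y -> exp x <= exp y.
Proof. intro H. destruct H as [H|H]; [left; apply exp_increasing; auto| subst; lra]. Qed.

Lemma cplus f g x : continuity_pt f x -> continuity_pt g x -> continuity_pt (fun s => f s + g s) x.
Proof. intros; apply (continuity_pt_plus f g); auto. Qed.
Lemma cminus f g x : continuity_pt f x -> continuity_pt g x -> continuity_pt (fun s => f s - g s) x.
Proof. intros; apply (continuity_pt_minus f g); auto. Qed.
Lemma cmult f g x : continuity_pt f x -> continuity_pt g x -> continuity_pt (fun s => f s * g s) x.
Proof. intros; apply (continuity_pt_mult f g); auto. Qed.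
Lemma cdiv f g x : continuity_pt f x -> continuity_pt g x -> g x <> 0 ->
  continuity_pt (fun s => f s / g s) x.
Proof. intros; apply (continuity_pt_div f g); auto. Qed.
Lemma cinv f x : continuity_pt f x -> f x <> 0 -> continuity_pt (fun s => / f s) x.
Proof. intros; apply (continuity_pt_inv f); auto. Qed.
Lemma copp f x : continuity_pt f x -> continuity_pt (fun s => - f s) x.
Proof. intros; apply (continuity_pt_opp f); auto. Qed.
Lemma cconst c x : continuity_pt (fun _ => c) x.
Proof. apply continuity_pt_const. intros ??; auto. Qed.
Lemma cexp f x : continuity_pt f x -> continuity_pt (fun s => exp (f s)) x.
Proof. intros. apply (continuity_pt_comp f exp); auto. apply derivable_continuous_pt, derivable_pt_exp. Qed.
Lemma cabs f x : continuity_pt f x -> continuity_pt (fun s => Rabs (f s)) x.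
Proof. intros. apply (continuity_pt_comp f Rabs); auto. apply Rcontinuity_abs. Qed.
Lemma cpow f n x : continuity_pt f x -> continuity_pt (fun s => f s ^ n) x.
Proof. intros. apply (continuity_pt_comp f (fun y => y ^ n)); auto. apply derivable_continuous_pt, derivable_pt_pow. Qed.

Ltac cont_tac :=
  match goal with
  | |- continuity_pt (fun s => @?A s + @?B s) _ => apply (cplus A B); cont_tac
  | |- continuity_pt (fun s => @?A s - @?B s) _ => apply (cminus A B); cont_tac
  | |- continuity_pt (fun s => @?A s * @?B s) _ => apply (cmult A B); cont_tac
  | |- continuity_pt (fun s => @?A s / @?B s) _ => apply (cdiv A B); [cont_tac|cont_tac|]
  | |- continuity_pt (fun s => / @?A s) _ => apply (cinv A); [cont_tac|]
  | |- continuity_pt (fun s => - @?A s) _ => apply (copp A); cont_tac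
  | |- continuity_pt (fun s => exp (@?A s)) _ => apply (cexp A); cont_tac
  | |- continuity_pt (fun s => Rabs (@?A s)) _ => apply (cabs A); cont_tac
  | |- continuity_pt (fun s => (@?A s) ^ ?n) _ => apply (cpow A n); cont_tac
  | |- continuity_pt (fun s => ?c) _ => apply cconst
  | |- _ => first [assumption | eauto | idtac]
  end.

Lemma cont2_within_comp (S : R -> R -> Prop) F u v s0 : cont2_within S F (u s0) (v s0) ->
  continuity_pt u s0 -> continuity_pt v s0 -> (forall s, S (u s) (v s)) ->
  continuity_pt (fun s => F (u s) (v s)) s0.
Proof.
  intros HF Hu Hv HS e He. destruct (HF e He) as [dl [Hdl Hd]].
  destruct (Hu dl Hdl) as [d1 [Hd1 Hu']]. destruct (Hv dl Hdl) as [d2 [Hd2 Hv']].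
  exists (Rmin d1 d2). split; [apply Rmin_pos; auto|]. intros s [Hs1 Hs2]. simpl in *. unfold Rdist in *.
  destruct (Req_dec s s0) as [E|Ne]; [subst; rewrite Rminus_eq_0, Rabs_R0; lra|].
  apply Hd; auto.
  - apply (Hu' s). split; [split; auto; unfold no_cond; auto|]. eapply Rlt_le_trans; [exact Hs2| apply Rmin_l].
  - apply (Hv' s). split; [split; auto; unfold no_cond; auto|]. eapply Rlt_le_trans; [exact Hs2| apply Rmin_r].
Qed.

Lemma RInt_zero_length f a : RInt f a a = 0.
Proof. apply (RInt_point (V:=R_CompleteNormedModule)). Qed.

Lemma nonincreasing_of_deriv_nonpos F dF a b : a <= b -> (forall x, continuity_pt F x) ->
  (forall x, a < x < b -> derivable_pt_lim F x (dF x)) -> (forall x, a < x < b -> dF x <= 0) ->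
  F b <= F a.
Proof.
  intros Hab HC HD Hneg. destruct (Req_dec a b) as [E|Hne]; [subst; lra|].
  assert (pr1 : forall c, a < c < b -> derivable_pt F c).
  { intros c Hc. exists (dF c). apply HD; auto. }
  assert (pr2 : forall c, a < c < b -> derivable_pt id c).
  { intros c Hc. apply derivable_pt_id. }
  destruct (MVT F id a b pr1 pr2) as [c [P E]];
    [lra| intros; auto | intros; apply derivable_continuous_pt, derivable_pt_id|].
  rewrite (derive_pt_eq_0 F c (dF c) (pr1 c P) (HD c P)) in E.
  rewrite (derive_pt_eq_0 id c 1 (pr2 c P) (derivable_pt_lim_id c)) in E.
  unfold id in E. specialize (Hneg c P).
  assert ((b - a) * dF c <= 0) by nra.
  lra.
Qed.

Section Primitives.
Variable f : R -> R.
Hypothesis Cf : forall s, continuity_pt f s.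

Lemma ex_RInt_cont a b : ex_RInt f a b.
Proof.
  apply (ex_RInt_continuous (V:=R_CompleteNormedModule)). intros.
  apply (proj1 (continuity_pt_filterlim f _)). auto.
Qed.

Lemma RInt_primitive_deriv a x : derivable_pt_lim (RInt f a) x (f x).
Proof.
  apply is_derive_Reals. apply is_derive_RInt with (a := a).
  - apply filter_forall. intro y. apply (RInt_correct (V:=R_CompleteNormedModule)). apply ex_RInt_cont.
  - apply (proj1 (continuity_pt_filterlim f _)). auto.
Qed.

Lemma RInt_primitive_cont a x : continuity_pt (RInt f a) x.
Proof. apply derivable_continuous_pt. exists (f x). apply RInt_primitive_deriv. Qed.

Lemma RInt_scal_r al b c : RInt (fun s => f s * c) al b = RInt f al b * c.
Proof.
  rewrite Rmult_comm.
  pose proof (RInt_scal (V:=R_CompleteNormedModule) f al b c (ex_RInt_cont al b)) as E.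
  simpl in E. unfold scal in E; simpl in E; unfold mult in E; simpl in E. rewrite <- E.
  apply RInt_ext. intros. unfold scal; simpl; unfold mult; simpl. ring.
Qed.

Lemma RInt_le_const a b M : a <= b -> (forall x, a <= x <= b -> f x <= M) ->
  RInt f a b <= (b - a) * M.
Proof.
  intros Hab HM.
  replace ((b - a) * M) with (RInt (fun _ => M) a b).
  - apply RInt_le; auto. apply ex_RInt_cont. apply (ex_RInt_const (V:=R_CompleteNormedModule)).
    intros; apply HM; lra.
  - rewrite (RInt_const (V:=R_CompleteNormedModule)). reflexivity.
Qed.

Lemma RInt_primitive_mono al a b : a <= b -> (forall s, a < s < b -> 0 <= f s) ->
  RInt f al a <= RInt f al b.
Proof.
  intros Hab Hp.
  cut (- RInt f al b <= - RInt f al a); [lra|].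
  apply (nonincreasing_of_deriv_nonpos (fun x => - RInt f al x) (fun x => - f x) a b Hab).
  - intro x. apply continuity_pt_opp. apply RInt_primitive_cont; auto.
  - intros x Hx. apply (dopp (RInt f al)). apply RInt_primitive_deriv; auto.
  - intros x Hx. specialize (Hp x Hx). lra.
Qed.

Lemma RInt_nonneg al b : al <= b -> (forall s, al < s < b -> 0 <= f s) -> 0 <= RInt f al b.
Proof. intros. rewrite <- (RInt_zero_length f al). apply RInt_primitive_mono; auto. Qed.

Lemma Rabs_RInt_le al b : al <= b -> Rabs (RInt f al b) <= RInt (fun s => Rabs (f s)) al b.
Proof. intros Hab. apply abs_RInt_le; auto. apply ex_RInt_cont; auto. Qed.
End Primitives.

(* Clamping to [al, T]: extends functions on [al, T] to continuous functions on R. *)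
Definition clamp (al T x : R) := Rmax al (Rmin x T).

Lemma clamp_id al T x : al <= x <= T -> clamp al T x = x.
Proof. intro H. unfold clamp, Rmax, Rmin. repeat destruct Rle_dec; lra. Qed.
Lemma clamp_range al T x : al <= T -> al <= clamp al T x <= T.
Proof. intro H. unfold clamp, Rmax, Rmin. repeat destruct Rle_dec; lra. Qed.
Lemma clamp_lipschitz al T x y : Rabs (clamp al T x - clamp al T y) <= Rabs (x - y).
Proof. unfold clamp, Rmax, Rmin. repeat destruct Rle_dec; unfold Rabs; repeat destruct Rcase_abs; lra. Qed.
Lemma clamp_cont al T x : continuity_pt (clamp al T) x.
Proof.
  intros e He. exists e. split; auto. intros y [_ Hy]. simpl in *. unfold Rdist in *.
  eapply Rle_lt_trans; [apply clamp_lipschitz|]. auto.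
Qed.

(** * Riccati comparison on an interval

   With Ia = int_al a1, Ja = int_al |a1|, the function z = V e^{-Ia} satisfies
   z' = (a0 V^2 + a2) e^{-Ia}, which is squeezed between
   -g z^2 - k and k, where k = |a2| e^{Ja} and g = |a0| e^{Ja}. *)

Section RiccatiComparison.
Variables (al t : R) (V a0 a1 a2 : R -> R).
Hypotheses (Hat : al <= t) (C0 : forall s, continuity_pt a0 s) (C1 : forall s, continuity_pt a1 s)
  (C2 : forall s, continuity_pt a2 s) (CV : forall s, continuity_pt V s)
  (DV : forall s, al < s < t -> derivable_pt_lim V s (a0 s * V s ^ 2 + a1 s * V s + a2 s))
  (Hneg : forall s, al <= s <= t -> a0 s <= 0).

Let Ia := RInt a1 al.
Let Ja := RInt (fun s => Rabs (a1 s)) al.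
Let z := fun s => V s * exp (- Ia s).
Let k := fun s => Rabs (a2 s) * exp (Ja s).
Let P := RInt k al.
Let g := fun s => Rabs (a0 s) * exp (Ja s).

Lemma cont_Ia s : continuity_pt Ia s. Proof. apply RInt_primitive_cont; auto. Qed.
Lemma cont_Ja s : continuity_pt Ja s. Proof. apply RInt_primitive_cont. intro; cont_tac. Qed.
Lemma cont_k s : continuity_pt k s. Proof. unfold k. pose proof cont_Ja. cont_tac. Qed.
Lemma cont_g s : continuity_pt g s. Proof. unfold g. pose proof cont_Ja. cont_tac. Qed.
Lemma cont_z s : continuity_pt z s. Proof. unfold z. pose proof cont_Ia. cont_tac. Qed.
Lemma cont_P s : continuity_pt P s. Proof. apply RInt_primitive_cont, cont_k. Qed.

Lemma k_nonneg x : 0 <= k x.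
Proof. unfold k. apply Rmult_le_pos; [apply Rabs_pos| left; apply exp_pos]. Qed.
Lemma g_nonneg x : 0 <= g x.
Proof. unfold g. apply Rmult_le_pos; [apply Rabs_pos| left; apply exp_pos]. Qed.

Lemma deriv_z s : al < s < t -> derivable_pt_lim z s ((a0 s * V s ^ 2 + a2 s) * exp (- Ia s)).
Proof.
  intro Hs. unfold z.
  apply dlim_eq with ((a0 s * V s ^ 2 + a1 s * V s + a2 s) * exp (- Ia s) + V s * (exp (- Ia s) * (- a1 s))).
  - apply (dmul V (fun y => exp (- Ia y))); [apply DV; auto|].
    apply (dexp (fun y => - Ia y)). apply (dopp Ia). apply RInt_primitive_deriv; auto.
  - ring.
Qed.

Lemma Ia_le_Ja s : al <= s -> - Ia s <= Ja s /\ Ia s <= Ja s.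
Proof.
  intro H. pose proof (Rabs_RInt_le a1 C1 al s H).
  unfold Ia, Ja. split; unfold Rabs in *; destruct Rcase_abs; lra.
Qed.

Lemma Ja_mono a b : a <= b -> Ja a <= Ja b.
Proof. intro H. apply RInt_primitive_mono; auto. intro; cont_tac. intros; apply Rabs_pos. Qed.

Let Ka := RInt (fun s => Rabs (a2 s)) al t * exp (Ja t).

Lemma Ka_nonneg : 0 <= Ka.
Proof.
  apply Rmult_le_pos; [|left; apply exp_pos].
  apply RInt_nonneg; auto. intro; cont_tac. intros; apply Rabs_pos.
Qed.

Lemma P_nonneg x : al <= x -> 0 <= P x.
Proof. intro; apply RInt_nonneg; auto. apply cont_k. intros; apply k_nonneg. Qed.

(* P(s) <= P(t) <= Ka for s <= t. *)
Lemma P_le_Ka x : al <= x <= t -> P x <= Ka.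
Proof.
  intro Hx. apply Rle_trans with (P t).
  - apply RInt_primitive_mono; [apply cont_k| lra| intros; apply k_nonneg].
  - unfold P, Ka. rewrite <- RInt_scal_r by (intro; cont_tac).
    apply RInt_le; auto.
    + apply ex_RInt_cont, cont_k.
    + apply ex_RInt_cont. intro; cont_tac.
    + intros y Hy. unfold k. apply Rmult_le_compat_l; [apply Rabs_pos|].
      apply exp_le_mono, Ja_mono. lra.
Qed.

(* Upper bound: z - P is nonincreasing. *)
Lemma riccati_upper : V t * exp (- RInt a1 al t) <= V al + Ka.
Proof.
  assert (Hmono : z t - P t <= z al - P al).
  { apply (nonincreasing_of_deriv_nonpos (fun s => z s - P s)
      (fun s => (a0 s * V s ^ 2 + a2 s) * exp (- Ia s) - k s)); auto.
    - intro. apply continuity_pt_minus; [apply cont_z|apply cont_P].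
    - intros s Hs. apply (dsub z P); [apply deriv_z; auto| apply RInt_primitive_deriv, cont_k].
    - intros s Hs. unfold k.
      destruct (Ia_le_Ja s ltac:(lra)).
      assert (exp (- Ia s) <= exp (Ja s)) by (apply exp_le_mono; lra).
      pose proof (exp_pos (- Ia s)).
      assert (a0 s * V s ^ 2 <= 0) by (pose proof (pow2_ge_0 (V s)); pose proof (Hneg s ltac:(lra)); nra).
      pose proof (Rle_abs (a2 s)). pose proof (Rabs_pos (a2 s)).
      assert (a2 s * exp (- Ia s) <= Rabs (a2 s) * exp (Ja s))
        by (apply Rle_trans with (Rabs (a2 s) * exp (- Ia s));
            [apply Rmult_le_compat_r| apply Rmult_le_compat_l]; lra).
      assert (a0 s * V s ^ 2 * exp (- Ia s) <= 0)
        by (rewrite <- (Rmult_0_l (exp (- Ia s))); apply Rmult_le_compat_r; lra).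
      lra. }
  pose proof (P_le_Ka t ltac:(lra)).
  assert (P0 : P al = 0) by apply RInt_zero_length.
  assert (Ia0 : Ia al = 0) by apply RInt_zero_length.
  unfold z in Hmono. rewrite Ia0, Ropp_0, exp_0 in Hmono. unfold Ia in Hmono. lra.
Qed.

(** Lower bound, via the barrier B(x) = -P(x) / (1 - Ka G(x)), G = int_al g. *)

Let G := RInt g al.
Let den := fun x => 1 - Ka * G (clamp al t x).
Let B := fun x => - P x / den x.

Lemma G_mono a b : a <= b -> G a <= G b.
Proof. intro; apply RInt_primitive_mono; auto. apply cont_g. intros; apply g_nonneg. Qed.
Lemma G_nonneg x : al <= x -> 0 <= G x.
Proof. intro; apply RInt_nonneg; auto. apply cont_g. intros; apply g_nonneg. Qed.

Section Lower.
Hypothesis HKG : Ka * G t < 1.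

Lemma den_bounds x : 1 - Ka * G t <= den x <= 1.
Proof.
  unfold den. pose proof (clamp_range al t x Hat). pose proof Ka_nonneg.
  pose proof (G_mono (clamp al t x) t ltac:(lra)). pose proof (G_nonneg (clamp al t x) ltac:(lra)).
  split; nra.
Qed.
Lemma den_pos x : 0 < den x.
Proof. pose proof (den_bounds x). lra. Qed.

Lemma cont_B x : continuity_pt B x.
Proof.
  assert (Cden : continuity_pt den x).
  { unfold den. apply continuity_pt_minus; [apply cconst|].
    apply continuity_pt_mult; [apply cconst|].
    apply (continuity_pt_comp (clamp al t) G); [apply clamp_cont| apply RInt_primitive_cont, cont_g]. }
  unfold B. apply continuity_pt_div; [apply continuity_pt_opp, cont_P| exact Cden|].
  pose proof (den_pos x); lra.
Qed.

Lemma deriv_B x : al < x < t ->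
  derivable_pt_lim B x ((- k x * (1 - Ka * G x) - (- Ka * g x) * (- P x)) / (1 - Ka * G x) ^ 2).
Proof.
  intro Hx.
  apply dlim_local with (f := fun y => - P y / (1 - Ka * G y)) (e := Rmin (x - al) (t - x)).
  - apply Rmin_pos; lra.
  - intros y Hy. unfold B, den. pose proof (near_interior al t x y Hx Hy).
    rewrite clamp_id; [reflexivity| lra].
  - apply (ddiv (fun y => - P y) (fun y => 1 - Ka * G y)).
    + pose proof (den_pos x). unfold den in H. rewrite clamp_id in H; lra.
    + apply (dopp P). apply RInt_primitive_deriv, cont_k.
    + apply dlim_eq with (0 - (0 * G x + Ka * g x)); [|ring].
      apply (dsub (fun _ => 1) (fun y => Ka * G y)); [apply dconst|].
      apply (dmul (fun _ => Ka) G); [apply dconst| apply RInt_primitive_deriv, cont_g].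
Qed.

Lemma z_deriv_lower x : al < x < t ->
  - g x * z x ^ 2 - k x <= (a0 x * V x ^ 2 + a2 x) * exp (- Ia x).
Proof.
  intro Hx. unfold g, k, z.
  destruct (Ia_le_Ja x ltac:(lra)) as [E1 E2].
  assert (e1 : exp (- Ia x) <= exp (Ja x)) by (apply exp_le_mono; lra).
  assert (e2 : exp (Ia x) <= exp (Ja x)) by (apply exp_le_mono; lra).
  assert (e0 : 0 < exp (- Ia x)) by apply exp_pos.
  assert (ee : exp (- Ia x) * exp (Ia x) = 1)
    by (rewrite <- exp_plus; replace (- Ia x + Ia x) with 0 by ring; apply exp_0).
  assert (Ha0 : a0 x <= 0) by (apply Hneg; lra).
  assert (Ra0 : Rabs (a0 x) = - a0 x) by (unfold Rabs; destruct Rcase_abs; lra).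
  rewrite Ra0.
  assert (A : a0 x * V x ^ 2 * exp (- Ia x) = a0 x * exp (Ia x) * (V x * exp (- Ia x)) ^ 2).
  { replace (a0 x * exp (Ia x) * (V x * exp (- Ia x)) ^ 2)
      with (a0 x * V x ^ 2 * exp (- Ia x) * (exp (- Ia x) * exp (Ia x))) by ring.
    rewrite ee. ring. }
  assert (B1 : - - a0 x * exp (Ja x) * (V x * exp (- Ia x)) ^ 2
               <= a0 x * exp (Ia x) * (V x * exp (- Ia x)) ^ 2).
  { pose proof (pow2_ge_0 (V x * exp (- Ia x))).
    assert (a0 x * exp (Ja x) <= a0 x * exp (Ia x)) by nra. nra. }
  assert (B2 : - (Rabs (a2 x) * exp (Ja x)) <= a2 x * exp (- Ia x)).
  { assert (- Rabs (a2 x) <= a2 x) by (unfold Rabs; destruct Rcase_abs; lra).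
    pose proof (Rabs_pos (a2 x)).
    assert (- (Rabs (a2 x) * exp (Ja x)) <= - (Rabs (a2 x) * exp (- Ia x))) by nra.
    nra. }
  replace ((a0 x * V x ^ 2 + a2 x) * exp (- Ia x))
    with (a0 x * V x ^ 2 * exp (- Ia x) + a2 x * exp (- Ia x)) by ring.
  rewrite A. lra.
Qed.

(* With c = g (z + B) and M = int_al c, the quantity (z - B) e^M is nondecreasing. *)
Let c := fun x => g x * (z x + B x).
Let M := RInt c al.

Lemma cont_c x : continuity_pt c x.
Proof. unfold c. pose proof cont_g. pose proof cont_z. pose proof cont_B. cont_tac. Qed.

(* Key inequality: (z - B)' + c (z - B) >= 0. *)
Lemma barrier_supersolution x : al < x < t ->
  0 <= (a0 x * V x ^ 2 + a2 x) * exp (- Ia x)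
       - (- k x * (1 - Ka * G x) - (- Ka * g x) * (- P x)) / (1 - Ka * G x) ^ 2
       + c x * (z x - B x).
Proof.
  intro Hx. pose proof (z_deriv_lower x Hx).
  pose proof (den_bounds x) as Db. unfold den in Db. rewrite clamp_id in Db by lra.
  unfold c, B, den. rewrite clamp_id by lra.
  set (d := 1 - Ka * G x) in *.
  assert (Pk : P x <= Ka) by (apply P_le_Ka; lra).
  assert (P0 : 0 <= P x) by (apply P_nonneg; lra).
  pose proof (g_nonneg x). pose proof (k_nonneg x). pose proof Ka_nonneg.
  assert (E : - (- k x * d - - Ka * g x * - P x) / d ^ 2 + g x * (z x + - P x / d) * (z x - - P x / d)
           = g x * z x ^ 2 + k x / d + g x * P x * (Ka - P x) / d ^ 2) by (field; lra).
  assert (k x <= k x / d).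
  { apply Rmult_le_reg_r with d; [lra|]. unfold Rdiv. rewrite Rmult_assoc, Rinv_l by lra. nra. }
  assert (0 <= g x * P x * (Ka - P x) / d ^ 2).
  { apply Rmult_le_pos; [|left; apply Rinv_0_lt_compat; nra].
    apply Rmult_le_pos; [apply Rmult_le_pos|]; lra. }
  lra.
Qed.

Lemma riccati_lower_aux : 0 <= V al -> - Ka / (1 - Ka * G t) <= V t * exp (- RInt a1 al t).
Proof.
  intro HV.
  set (Y := fun x => (z x - B x) * exp (M x)).
  assert (HY : Y al <= Y t).
  { cut (- Y t <= - Y al); [lra|].
    apply (nonincreasing_of_deriv_nonpos (fun x => - Y x) (fun x => - ((( a0 x * V x ^ 2 + a2 x) * exp (- Ia x)
         - (- k x * (1 - Ka * G x) - (- Ka * g x) * (- P x)) / (1 - Ka * G x) ^ 2) * exp (M x)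
         + (z x - B x) * (exp (M x) * c x)))); auto.
    - intro x. unfold Y. pose proof cont_z. pose proof cont_B.
      assert (forall s, continuity_pt M s) by (intro; apply RInt_primitive_cont, cont_c). cont_tac.
    - intros x Hx. apply (dopp Y). unfold Y.
      apply (dmul (fun y => z y - B y) (fun y => exp (M y))).
      + apply (dsub z B); [apply deriv_z; auto| apply deriv_B; auto].
      + apply (dexp M). apply RInt_primitive_deriv, cont_c.
    - intros x Hx. pose proof (barrier_supersolution x Hx). pose proof (exp_pos (M x)).
      assert (0 <= (((a0 x * V x ^ 2 + a2 x) * exp (- Ia x)
         - (- k x * (1 - Ka * G x) - (- Ka * g x) * (- P x)) / (1 - Ka * G x) ^ 2)
         + c x * (z x - B x)) * exp (M x)) by (apply Rmult_le_pos; lra).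
      nra. }
  unfold Y, M, B, den, z, P, G, Ia in HY.
  rewrite (clamp_id al t t), (clamp_id al t al), !RInt_zero_length, Ropp_0, exp_0 in HY by lra.
  fold P G Ia in HY.
  assert (Dp : 0 < 1 - Ka * G t) by lra.
  pose proof (P_le_Ka t ltac:(lra)).
  pose proof (exp_pos (RInt c al t)).
  assert (HH : 0 <= (V t * exp (- Ia t) - - P t / (1 - Ka * G t))).
  { replace ((V al * 1 - - 0 / (1 - Ka * 0)) * 1) with (V al) in HY by (field; lra).
    apply Rmult_le_reg_r with (exp (RInt c al t)); auto. lra. }
  assert (- Ka / (1 - Ka * G t) <= - P t / (1 - Ka * G t)).
  { unfold Rdiv. apply Rmult_le_compat_r; [left; apply Rinv_0_lt_compat; auto| lra]. }
  unfold Ia in HH. lra.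
Qed.
End Lower.

Lemma riccati_lower : 0 <= V al ->
  Ka * RInt (fun tau => Rabs (a0 tau) * exp (Ja tau)) al t < 1 ->
  - Ka / (1 - Ka * RInt (fun tau => Rabs (a0 tau) * exp (Ja tau)) al t)
    <= V t * exp (- RInt a1 al t).
Proof. intros H1 H2. apply riccati_lower_aux; auto. Qed.
End RiccatiComparison.

Lemma Qf_strict y x : 0 <= y -> y < x -> Qf y < Qf x.
Proof.
  intros H0 H1. unfold Qf. assert (exp y < exp x) by (apply exp_increasing; auto).
  pose proof (exp_pos y). nra.
Qed.

(* x(z0,z1,z2) is well defined: Q is continuous, Q(0) = 0 and Q(c+1) > c. *)
Lemma xsol_spec z0 z1 z2 : 0 < z0 -> 0 < z1 -> 0 < z2 ->
  0 < xsol z0 z1 z2 /\ Qf (xsol z0 z1 z2) = z1 / sqrt (z0 * z2).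
Proof.
  intros h0 h1 h2. set (c := z1 / sqrt (z0 * z2)).
  assert (hc : 0 < c) by (apply Rdiv_lt_0_compat; auto; apply sqrt_lt_R0; nra).
  unfold xsol. fold c. apply (epsilon_spec (inhabits 0) (fun x => 0 < x /\ Qf x = c)).
  destruct (IVT_interv (fun x => Qf x - c) 0 (c + 1)) as [z [Hz Ez]].
  - intros a _. unfold Qf. apply continuity_pt_minus; [|apply cconst].
    apply continuity_pt_mult; [apply derivable_continuous_pt, derivable_pt_id|
                               apply derivable_continuous_pt, derivable_pt_exp].
  - lra.
  - unfold Qf. rewrite exp_0. lra.
  - unfold Qf. pose proof (exp_ineq1_le (c + 1)). assert (0 <= c + 1) by lra. nra.
  - exists z. split; [|unfold Qf in *; lra].
    destruct Hz as [[Hz|Hz] _]; auto. subst. unfold Qf in Ez. rewrite exp_0 in Ez. lra.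
Qed.

(* Arithmetic core: with y = s A1 / m < x and Q(x) = A1 / sqrt (A0 A2),
   (s A2 / m^2 e^y) (s A0 e^y) = (sqrt (A0 A2) Q(y) / A1)^2 < 1. *)
Lemma product_bound_small s m A0 A1 A2 x : 0 <= s -> 0 < m -> 0 < A0 -> 0 < A1 -> 0 < A2 ->
  Qf x = A1 / sqrt (A0 * A2) -> s * A1 / m < x ->
  (s * (A2 / m ^ 2) * exp (s * A1 / m)) * (s * (A0 * exp (s * A1 / m))) < 1.
Proof.
  intros Hs Hm H0 H1 H2 Qx Hyx. set (y := s * A1 / m) in *.
  assert (Hy0 : 0 <= y) by (unfold y; apply Rmult_le_pos; [nra| left; apply Rinv_0_lt_compat; lra]).
  set (q := sqrt (A0 * A2)) in *.
  assert (q0 : 0 < q) by (apply sqrt_lt_R0; nra).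
  assert (qq : q * q = A0 * A2) by (apply sqrt_sqrt; nra).
  assert (Qy : Qf y < A1 / q) by (rewrite <- Qx; apply Qf_strict; auto).
  unfold Qf in Qy.
  assert (Qy' : q * (y * exp y) < A1).
  { apply Rmult_lt_compat_l with (r := q) in Qy; auto.
    replace (q * (A1 / q)) with A1 in Qy by (field; lra). lra. }
  assert (Qy0 : 0 <= q * (y * exp y)) by (pose proof (exp_pos y); apply Rmult_le_pos; nra).
  assert (Eq : (s * (A2 / m ^ 2) * exp y) * (s * (A0 * exp y)) = (q * (y * exp y)) ^ 2 / A1 ^ 2).
  { replace ((q * (y * exp y)) ^ 2) with (A0 * A2 * y ^ 2 * (exp y) ^ 2) by (rewrite <- qq; ring).
    set (e := exp y). unfold y. field. lra. }
  rewrite Eq. apply Rmult_lt_reg_r with (A1 ^ 2); [nra|].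
  unfold Rdiv. rewrite Rmult_assoc, Rinv_l by nra. nra.
Qed.

Lemma KG_small al t (a0 a1 a2 : R -> R) A0 A1 A2 m x :
  al <= t -> 0 < m -> 0 < A0 -> 0 < A1 -> 0 < A2 ->
  Qf x = A1 / sqrt (A0 * A2) -> t < al + x / A1 * m ->
  (forall s, continuity_pt a0 s) -> (forall s, continuity_pt a1 s) -> (forall s, continuity_pt a2 s) ->
  (forall s, al <= s <= t ->
     Rabs (a0 s) <= A0 /\ Rabs (a1 s) <= A1 / m /\ Rabs (a2 s) <= A2 / m ^ 2) ->
  RInt (fun s => Rabs (a2 s)) al t * exp (RInt (fun s => Rabs (a1 s)) al t) *
  RInt (fun tau => Rabs (a0 tau) * exp (RInt (fun s => Rabs (a1 s)) al tau)) al t < 1.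
Proof.
  intros Hat Hm H0 H1 H2 Qx Ht C0 C1 C2 Hb.
  set (s := t - al). set (y := s * A1 / m).
  assert (Hyx : y < x).
  { unfold y, s. apply Rmult_lt_reg_r with (m / A1); [apply Rdiv_lt_0_compat; auto|].
    replace ((t - al) * A1 / m * (m / A1)) with (t - al) by (field; lra).
    replace (x * (m / A1)) with (x / A1 * m) by (field; lra). lra. }
  set (Ja := RInt (fun s => Rabs (a1 s)) al).
  assert (CJ : forall u, continuity_pt Ja u) by (intro; apply RInt_primitive_cont; intro; cont_tac).
  assert (J1 : forall tau, al <= tau <= t -> Ja tau <= y).
  { intros tau Htau. apply Rle_trans with ((tau - al) * (A1 / m)).
    - apply RInt_le_const; [intro; cont_tac| lra|]. intros u Hu. apply (Hb u). lra.
    - unfold y, s. replace ((t - al) * A1 / m) with ((t - al) * (A1 / m)) by (field; lra).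
      apply Rmult_le_compat_r; [apply Rlt_le, Rdiv_lt_0_compat; auto| lra]. }
  assert (Kb : RInt (fun s => Rabs (a2 s)) al t <= s * (A2 / m ^ 2)).
  { apply RInt_le_const; [intro; cont_tac| auto|]. intros u Hu; apply Hb; lra. }
  assert (Gb : RInt (fun tau => Rabs (a0 tau) * exp (Ja tau)) al t <= s * (A0 * exp y)).
  { apply RInt_le_const; [intro; cont_tac| auto|].
    intros u Hu. apply Rmult_le_compat; [apply Rabs_pos| left; apply exp_pos| apply Hb; lra|
                                         apply exp_le_mono, J1; lra]. }
  assert (K0 : 0 <= RInt (fun s => Rabs (a2 s)) al t)
    by (apply RInt_nonneg; auto; [intro; cont_tac| intros; apply Rabs_pos]).
  assert (G0 : 0 <= RInt (fun tau => Rabs (a0 tau) * exp (Ja tau)) al t).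
  { apply RInt_nonneg; auto; [intro; cont_tac|].
    intros; apply Rmult_le_pos; [apply Rabs_pos| left; apply exp_pos]. }
  assert (E1 : exp (Ja t) <= exp y) by (apply exp_le_mono, J1; lra).
  pose proof (exp_pos (Ja t)).
  pose proof (product_bound_small s m A0 A1 A2 x ltac:(unfold s; lra) Hm H0 H1 H2 Qx Hyx) as Hsmall.
  fold y in Hsmall.
  assert (RInt (fun s => Rabs (a2 s)) al t * exp (Ja t) <= s * (A2 / m ^ 2) * exp y)
    by (apply Rmult_le_compat; lra).
  apply Rle_lt_trans with ((s * (A2 / m ^ 2) * exp y) * (s * (A0 * exp y))); [|exact Hsmall].
  apply Rmult_le_compat; try lra. apply Rmult_le_pos; lra.
Qed.

Lemma Int_eq_RInt f g a b : a <= b -> (forall x, a <= x <= b -> f x = g x) ->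
  (forall x, continuity_pt g x) -> Int f a b = RInt g a b.
Proof.
  intros Hab E Hc.
  assert (eg : ex_RInt g a b) by (apply ex_RInt_cont; auto).
  assert (ef : ex_RInt f a b).
  { apply ex_RInt_ext with g; auto. intros x Hx. rewrite Rmin_left, Rmax_right in Hx by lra.
    symmetry; apply E; lra. }
  pose proof (ex_RInt_Reals_0 f a b ef) as pr.
  unfold Int.
  destruct (epsilon_spec (inhabits 0)
              (fun I => exists pr : Riemann_integrable f a b, RiemannInt pr = I)
              (ex_intro _ _ (ex_intro _ pr eq_refl))) as [pr' Hpr'].
  rewrite <- Hpr', <- RInt_Reals. apply RInt_ext. intros x Hx.
  rewrite Rmin_left, Rmax_right in Hx by lra. apply E; lra.
Qed.

Definition cont_on_interval (f : R -> R) (al T t0 : R) := forall e, 0 < e -> exists dl, 0 < dl /\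
  forall s, al <= s <= T -> Rabs (s - t0) < dl -> Rabs (f s - f t0) < e.

Lemma clamp_comp_cont f al T : al <= T -> (forall t, al <= t <= T -> cont_on_interval f al T t) ->
  forall s, continuity_pt (fun x => f (clamp al T x)) s.
Proof.
  intros HT Hr s e He. destruct (Hr (clamp al T s) (clamp_range al T s HT) e He) as [dl [Hdl Hd]].
  exists dl. split; auto. intros y [_ Hy]. simpl in *. unfold Rdist in *.
  apply Hd. apply clamp_range; auto. eapply Rle_lt_trans; [apply clamp_lipschitz|]. auto.
Qed.

Lemma deriv_within_cont X al T t l :
  has_deriv_within (fun s => al <= s <= T) X t l -> cont_on_interval X al T t.
Proof.
  intros HD e He. destruct (HD 1 ltac:(lra)) as [dl [Hdl Hd]].
  pose proof (Rabs_pos l).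
  set (dl' := Rmin dl (e / (Rabs l + 1))).
  assert (Hp : 0 < e / (Rabs l + 1)) by (apply Rdiv_lt_0_compat; lra).
  exists dl'. split; [apply Rmin_pos; auto|]. intros s Hs Hst.
  destruct (Req_dec s t) as [E|Ne]; [subst; rewrite Rminus_eq_0, Rabs_R0; lra|].
  assert (h1 : Rabs (s - t) < dl) by (eapply Rlt_le_trans; [exact Hst| apply Rmin_l]).
  assert (h2 : Rabs (s - t) < e / (Rabs l + 1)) by (eapply Rlt_le_trans; [exact Hst| apply Rmin_r]).
  specialize (Hd s Hs Ne h1).
  assert (hq : Rabs ((X s - X t) / (s - t)) < Rabs l + 1).
  { replace ((X s - X t) / (s - t)) with (((X s - X t) / (s - t) - l) + l) by ring.
    eapply Rle_lt_trans; [apply Rabs_triang|]. lra. }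
  replace (X s - X t) with ((X s - X t) / (s - t) * (s - t)) by (field; lra).
  rewrite Rabs_mult.
  assert (0 < Rabs (s - t)) by (apply Rabs_pos_lt; lra).
  apply Rle_lt_trans with ((Rabs l + 1) * Rabs (s - t)); [apply Rmult_le_compat_r; lra|].
  apply Rmult_lt_reg_r with (/ (Rabs l + 1)); [apply Rinv_0_lt_compat; lra|].
  replace ((Rabs l + 1) * Rabs (s - t) * / (Rabs l + 1)) with (Rabs (s - t)) by (field; lra).
  exact h2.
Qed.

(** Here the data are only known on [al, T]; clamping makes them continuous on R
   so that [riccati_upper], [riccati_lower] and [KG_small] apply. *)

Section RiccatiOnInterval.
Variables (al T t m A0 A1 A2 : R) (V c0 c1 c2 : R -> R).
Hypotheses (Hal : al <= t) (HtT : t <= T) (Hm : 0 < m) (HA0 : 0 < A0) (HA1 : 0 < A1) (HA2 : 0 < A2).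
Hypotheses (CV : forall s, continuity_pt (fun x => V (clamp al T x)) s)
  (C0 : forall s, continuity_pt (fun x => c0 (clamp al T x)) s)
  (C1 : forall s, continuity_pt (fun x => c1 (clamp al T x)) s)
  (C2 : forall s, continuity_pt (fun x => c2 (clamp al T x)) s).
Hypothesis DV : forall s, al < s < T -> derivable_pt_lim V s (c0 s * V s ^ 2 + c1 s * V s + c2 s).
Hypothesis Hneg : forall s, al <= s <= T -> c0 s <= 0.
Hypothesis Hb : forall s, al <= s <= T ->
  Rabs (c0 s) <= A0 /\ Rabs (c1 s) <= A1 / m /\ Rabs (c2 s) <= A2 / m ^ 2.
Hypothesis Htx : t < al + xsol A0 A1 A2 / A1 * m.

Let e0 := fun x => c0 (clamp al T x).
Let e1 := fun x => c1 (clamp al T x).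
Let e2 := fun x => c2 (clamp al T x).
Let W := fun x => V (clamp al T x).

Lemma clamp_on (f : R -> R) x : al <= x <= t -> f (clamp al T x) = f x.
Proof. intro h. rewrite clamp_id; auto. lra. Qed.

Lemma deriv_W s : al < s < t -> derivable_pt_lim W s (e0 s * W s ^ 2 + e1 s * W s + e2 s).
Proof.
  intro Hs. unfold W, e0, e1, e2. rewrite !clamp_on by lra.
  apply dlim_local with (f := V) (e := Rmin (s - al) (T - s)); [apply Rmin_pos; lra| |apply DV; lra].
  intros z Hz. pose proof (near_interior al T s z ltac:(lra) Hz). rewrite clamp_id; lra.
Qed.

Lemma Int_c1 : Int c1 al t = RInt e1 al t.
Proof. apply Int_eq_RInt; auto. intros x Hx. unfold e1. rewrite clamp_on; auto. Qed.
Lemma Int_abs_c1 tau : al <= tau <= t ->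
  Int (fun s => Rabs (c1 s)) al tau = RInt (fun s => Rabs (e1 s)) al tau.
Proof.
  intro H. apply Int_eq_RInt; [lra| |intro; cont_tac]. intros x Hx. unfold e1. rewrite clamp_on; auto. lra.
Qed.
Lemma Int_abs_c2 : Int (fun s => Rabs (c2 s)) al t = RInt (fun s => Rabs (e2 s)) al t.
Proof. apply Int_eq_RInt; [lra| |intro; cont_tac]. intros x Hx. unfold e2. rewrite clamp_on; auto. Qed.
Lemma Int_weighted_c0 :
  Int (fun tau => Rabs (c0 tau) * exp (Int (fun s => Rabs (c1 s)) al tau)) al t
  = RInt (fun tau => Rabs (e0 tau) * exp (RInt (fun s => Rabs (e1 s)) al tau)) al t.
Proof.
  apply Int_eq_RInt; auto.
  - intros x Hx. unfold e0. rewrite clamp_on by auto. rewrite Int_abs_c1 by auto. reflexivity.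
  - assert (forall u, continuity_pt (RInt (fun s => Rabs (e1 s)) al) u)
      by (intro; apply RInt_primitive_cont; intro; cont_tac).
    intro; cont_tac.
Qed.

Theorem riccati_bounds_on_interval : 0 <= V al ->
  - Kf c2 c1 al t / (1 - Kf c2 c1 al t *
      Int (fun tau => Rabs (c0 tau) * exp (Int (fun s => Rabs (c1 s)) al tau)) al t)
    <= V t * exp (- Int c1 al t)
  /\ V t * exp (- Int c1 al t) <= V al + Kf c2 c1 al t.
Proof.
  intro HV.
  assert (Vt : V t = W t) by (unfold W; rewrite clamp_on; auto; lra).
  assert (Va : V al = W al) by (unfold W; rewrite clamp_on; auto; lra).
  unfold Kf. rewrite Int_weighted_c0, Int_c1, Int_abs_c2, (Int_abs_c1 t) by lra.
  rewrite Vt, Va.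
  assert (Hn : forall s, al <= s <= t -> e0 s <= 0)
    by (intros s Hs; unfold e0; rewrite clamp_on by auto; apply Hneg; lra).
  split.
  - apply (riccati_lower al t W e0 e1 e2); auto; [apply deriv_W| unfold W; rewrite clamp_on; lra|].
    destruct (xsol_spec A0 A1 A2) as [Hx Qx]; auto.
    apply (KG_small al t e0 e1 e2 A0 A1 A2 m (xsol A0 A1 A2)); auto.
    intros s Hs. unfold e0, e1, e2. rewrite !clamp_on by auto. apply Hb. lra.
  - apply (riccati_upper al t W e0 e1 e2); auto. apply deriv_W.
Qed.
End RiccatiOnInterval.

(** * C^1 functions of two variables on a planar set *)

Lemma locally_of_ball (x : R) (P : R -> Prop) e : 0 < e ->
  (forall y, Rabs (y - x) < e -> P y) -> locally x P.
Proof.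
  intros He H. exists (mkposreal e He). intros y Hy. apply H.
  unfold ball in Hy; simpl in Hy. unfold AbsRing_ball, abs, minus, plus, opp in Hy; simpl in Hy. exact Hy.
Qed.

Definition open_at (S : R -> R -> Prop) (x y : R) : Prop :=
  exists e, 0 < e /\ forall u v, Rabs (u - x) < e -> Rabs (v - y) < e -> S u v.

Definition C1_with (S : R -> R -> Prop) (F Fx Fy : R -> R -> R) : Prop :=
  partials_on S F Fx Fy /\
  (forall x y, S x y -> cont2_within S Fx x y /\ cont2_within S Fy x y).

Lemma open_at_shrink S x y : open_at S x y -> exists e, 0 < e /\
  forall u v, Rabs (u - x) < e -> Rabs (v - y) < e -> open_at S u v.
Proof.
  intros [e [He H]]. exists (e / 2). split; [lra|]. intros u v Hu Hv.
  exists (e / 2). split; [lra|]. intros u' v' Hu' Hv'. apply H.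
  - replace (u' - x) with ((u' - u) + (u - x)) by ring. eapply Rle_lt_trans; [apply Rabs_triang|]. lra.
  - replace (v' - y) with ((v' - v) + (v - y)) by ring. eapply Rle_lt_trans; [apply Rabs_triang|]. lra.
Qed.

Section C1Functions.
Variables (S : R -> R -> Prop) (F Fx Fy : R -> R -> R).
Hypothesis HF : C1_with S F Fx Fy.

Lemma C1_deriv_x x y : open_at S x y -> derivable_pt_lim (fun s => F s y) x (Fx x y).
Proof.
  intros [e [He Ho]]. destruct HF as [HP _]. destruct (HP x y) as [D _].
  { apply Ho; rewrite Rminus_eq_0, Rabs_R0; lra. }
  apply (deriv_within_interior (fun s => S s y) _ _ _ e); auto.
  intros; apply Ho; auto. rewrite Rminus_eq_0, Rabs_R0; lra.
Qed.

Lemma C1_deriv_y_line x y e : 0 < e -> (forall v, Rabs (v - y) < e -> S x v) ->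
  derivable_pt_lim (fun s => F x s) y (Fy x y).
Proof.
  intros He Ho. destruct HF as [HP _]. destruct (HP x y) as [_ [D _]].
  { apply Ho; rewrite Rminus_eq_0, Rabs_R0; lra. }
  apply (deriv_within_interior (fun s => S x s) _ _ _ e); auto.
Qed.

Lemma C1_deriv_y x y : open_at S x y -> derivable_pt_lim (fun s => F x s) y (Fy x y).
Proof.
  intros [e [He Ho]]. apply (C1_deriv_y_line x y e); auto.
  intros; apply Ho; auto. rewrite Rminus_eq_0, Rabs_R0; lra.
Qed.

Lemma C1_cont_x x y : open_at S x y -> continuity_2d_pt Fx x y.
Proof.
  intros [e [He Ho]]. destruct HF as [_ HC]. apply (cont2_within_interior S Fx x y e); auto.
  apply HC. apply Ho; rewrite Rminus_eq_0, Rabs_R0; lra.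
Qed.
Lemma C1_cont_y x y : open_at S x y -> continuity_2d_pt Fy x y.
Proof.
  intros [e [He Ho]]. destruct HF as [_ HC]. apply (cont2_within_interior S Fy x y e); auto.
  apply HC. apply Ho; rewrite Rminus_eq_0, Rabs_R0; lra.
Qed.
Lemma C1_cont x y : open_at S x y -> continuity_2d_pt F x y.
Proof.
  intros [e [He Ho]]. destruct HF as [HP _]. apply (cont2_within_interior S F x y e); auto.
  apply HP. apply Ho; rewrite Rminus_eq_0, Rabs_R0; lra.
Qed.

Lemma C1_differentiable x y : open_at S x y -> differentiable_pt_lim F x y (Fx x y) (Fy x y).
Proof.
  intro Ho. destruct (open_at_shrink S x y Ho) as [e [He Ho']].
  apply (differentiable_of_cont_partials F Fx Fy x y e); auto.
  - intros u v Hu Hv. split; [apply C1_deriv_x| apply C1_deriv_y]; auto.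
  - apply C1_cont_x; auto.
  - apply C1_cont_y; auto.
Qed.

Lemma C1_chain_rule (T Rr : R -> R) s0 dT dR : open_at S (T s0) (Rr s0) ->
  derivable_pt_lim T s0 dT -> derivable_pt_lim Rr s0 dR ->
  derivable_pt_lim (fun s => F (T s) (Rr s)) s0
    (Fx (T s0) (Rr s0) * dT + Fy (T s0) (Rr s0) * dR).
Proof.
  intros Ho H1 H2. apply derivable_pt_lim_comp_2d; auto. apply C1_differentiable; auto.
Qed.

Lemma C1_Derive_x x y : open_at S x y -> Derive (fun s => F s y) x = Fx x y.
Proof. intro H. apply is_derive_unique, is_derive_Reals, C1_deriv_x; auto. Qed.
Lemma C1_Derive_y x y : open_at S x y -> Derive (fun s => F x s) y = Fy x y.
Proof. intro H. apply is_derive_unique, is_derive_Reals, C1_deriv_y; auto. Qed.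
End C1Functions.

Lemma ex_derive_of_lim (f : R -> R) (x l : R) :
  derivable_pt_lim f x l -> @ex_derive R_AbsRing R_NormedModule f x.
Proof. intro H. exists l. apply is_derive_Reals. auto. Qed.

Lemma C1_Derive_locally S F Fx Fy x y : C1_with S F Fx Fy -> open_at S x y ->
  exists e, 0 < e /\ forall u v, Rabs (u - x) < e -> Rabs (v - y) < e ->
    open_at S u v /\
    locally u (fun z => Fy z v = Derive (fun t => F z t) v) /\
    locally v (fun z => Fx u z = Derive (fun t => F t z) u).
Proof.
  intros HF Ho. destruct (open_at_shrink S x y Ho) as [e [He Ho']].
  exists (e / 2). split; [lra|]. intros u v Hu Hv.
  assert (Hin : forall a b c, Rabs (a - b) < e / 2 -> Rabs (c - a) < e / 2 -> Rabs (c - b) < e).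
  { intros a b' c Ha Hc. replace (c - b') with ((c - a) + (a - b')) by ring.
    eapply Rle_lt_trans; [apply Rabs_triang|]. lra. }
  split; [apply Ho'; lra| split].
  - apply (locally_of_ball u _ (e / 2)); [lra|]. intros z Hz.
    symmetry. apply C1_Derive_y with (S := S) (Fx := Fx); auto. apply Ho'; [eauto| lra].
  - apply (locally_of_ball v _ (e / 2)); [lra|]. intros z Hz.
    symmetry. apply C1_Derive_x with (S := S) (Fy := Fy); auto. apply Ho'; [lra| eauto].
Qed.

(* Schwarz: if F, Fx, Fy are C^1 then the mixed partials Fyx and Fxy agree
   at interior points (Coquelicot's [Schwarz], after identifying [Derive]). *)
Lemma C1_schwarz S F Fx Fy Fxx Fxy Fyx Fyy x y :
  C1_with S F Fx Fy -> C1_with S Fx Fxx Fxy -> C1_with S Fy Fyx Fyy -> open_at S x y ->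
  Fyx x y = Fxy x y.
Proof.
  intros H0 H1 H2 Ho.
  destruct (C1_Derive_locally S F Fx Fy x y H0 Ho) as [e [He Hloc]].
  assert (E1 : forall u v, Rabs (u - x) < e -> Rabs (v - y) < e ->
            Derive (fun z => Derive (fun t => F z t) v) u = Fyx u v).
  { intros u v Hu Hv. destruct (Hloc u v Hu Hv) as [Oo [L1 _]].
    rewrite <- (Derive_ext_loc (fun z => Fy z v)) by exact L1.
    apply C1_Derive_x with (S := S) (Fy := Fyy); auto. }
  assert (E2 : forall u v, Rabs (u - x) < e -> Rabs (v - y) < e ->
            Derive (fun z => Derive (fun t => F t z) u) v = Fxy u v).
  { intros u v Hu Hv. destruct (Hloc u v Hu Hv) as [Oo [_ L2]].
    rewrite <- (Derive_ext_loc (fun z => Fx u z)) by exact L2.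
    apply C1_Derive_y with (S := S) (Fx := Fxx); auto. }
  assert (Z : Rabs (x - x) < e) by (rewrite Rminus_eq_0, Rabs_R0; auto).
  assert (Zy : Rabs (y - y) < e) by (rewrite Rminus_eq_0, Rabs_R0; auto).
  rewrite <- (E1 x y Z Zy), <- (E2 x y Z Zy).
  apply Schwarz.
  - exists (mkposreal e He). simpl. intros u v Hu Hv.
    destruct (Hloc u v Hu Hv) as [Oo [L1 L2]].
    split; [|split; [|split]].
    + apply ex_derive_of_lim with (Fx u v). apply C1_deriv_x with (S := S) (Fy := Fy); auto.
    + apply ex_derive_of_lim with (Fy u v). apply C1_deriv_y with (S := S) (Fx := Fx); auto.
    + apply (ex_derive_ext_loc (fun z => Fy z v)); [exact L1|].
      apply ex_derive_of_lim with (Fyx u v). apply C1_deriv_x with (S := S) (Fy := Fyy); auto.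
    + apply (ex_derive_ext_loc (fun z => Fx u z)); [exact L2|].
      apply ex_derive_of_lim with (Fxy u v). apply C1_deriv_y with (S := S) (Fx := Fxx); auto.
  - apply continuity_2d_pt_ext_loc with Fyx.
    + exists (mkposreal e He). simpl. intros u v Hu Hv. symmetry; apply E1; auto.
    + apply C1_cont_x with (S := S) (F := Fy) (Fy := Fyy); auto.
  - apply continuity_2d_pt_ext_loc with Fxy.
    + exists (mkposreal e He). simpl. intros u v Hu Hv. symmetry; apply E2; auto.
    + apply C1_cont_y with (S := S) (F := Fx) (Fx := Fxx); auto.
Qed.

Lemma C2_on_C1_with S F : C2_on S F -> exists Fx Fy Fxx Fxy Fyx Fyy,
  C1_with S F Fx Fy /\ C1_with S Fx Fxx Fxy /\ C1_with S Fy Fyx Fyy.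
Proof.
  intros [Fx [Fy [PF [[Fxx [Fxy CFx]] [Fyx [Fyy CFy]]]]]].
  exists Fx, Fy, Fxx, Fxy, Fyx, Fyy. split; [|split; assumption].
  split; auto. intros x y Hxy. split.
  - destruct CFx as [PFx _]. apply (PFx x y Hxy).
  - destruct CFy as [PFy _]. apply (PFy x y Hxy).
Qed.

(** * Density as a function of the Riemann invariants

   Since H' = c / rho > 0, H is increasing; its inverse [Hinv] recovers
   rho = Hinv ((w2 - w1) / 2), and the inverse function theorem gives
   rho' = rho / c. *)

Section DensityInversion.
Variables (p H : R -> R).
Hypotheses (Hp : pressure_ok p) (HH : H_is_primitive p H).

Definition Dcs (rho : R) := Der (Der p) rho / (2 * cs p rho).

Lemma Dp_pos rho : 0 < rho -> 0 < Der p rho.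
Proof. intro h. apply (Hp rho h). Qed.

Lemma cs_pos rho : 0 < rho -> 0 < cs p rho.
Proof. intro h. unfold cs. apply sqrt_lt_R0, Dp_pos; auto. Qed.

Lemma Dp_deriv rho : 0 < rho -> derivable_pt_lim (Der p) rho (Der (Der p) rho).
Proof.
  intro h. destruct (Hp rho h) as [_ [_ [[l Hl] _]]]. rewrite (Der_of_lim _ _ _ Hl). auto.
Qed.

Lemma cs_deriv rho : 0 < rho -> derivable_pt_lim (cs p) rho (Dcs rho).
Proof.
  intro h. unfold Dcs, cs.
  apply dlim_eq with (/ (2 * sqrt (Der p rho)) * Der (Der p) rho).
  - apply (dcomp (Der p) sqrt). apply Dp_deriv; auto. apply derivable_pt_lim_sqrt, Dp_pos; auto.
  - field. apply Rgt_not_eq, sqrt_lt_R0, Dp_pos; auto.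
Qed.

Lemma cs_cont rho : 0 < rho -> continuity_pt (cs p) rho.
Proof. intro h. apply derivable_continuous_pt. exists (Dcs rho). apply cs_deriv; auto. Qed.

Lemma Dcs_cont rho : 0 < rho -> continuity_pt Dcs rho.
Proof.
  intro h. unfold Dcs. apply continuity_pt_div.
  - apply (Hp rho h).
  - apply continuity_pt_mult; [apply continuity_pt_const; intros ??; auto| apply cs_cont; auto].
  - pose proof (cs_pos rho h). lra.
Qed.

Lemma H_deriv rho : 0 < rho -> derivable_pt_lim H rho (cs p rho / rho).
Proof. intro h. destruct HH as [_ [_ D]]. apply D; auto. Qed.

Lemma H_cont rho : 0 < rho -> continuity_pt H rho.
Proof. intro h. apply derivable_continuous_pt. eexists. apply H_deriv; auto. Qed.

Lemma H_increasing x y : 0 < x -> x < y -> H x < H y.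
Proof.
  intros hx hxy.
  destruct (MVT_cor2 H (fun r => cs p r / r) x y hxy) as [c [E Hc]].
  - intros c Hc. apply H_deriv. lra.
  - assert (0 < cs p c / c) by (apply Rdiv_lt_0_compat; [apply cs_pos|]; lra).
    assert (0 < cs p c / c * (y - x)) by (apply Rmult_lt_0_compat; lra). lra.
Qed.

Lemma H_injective x y : 0 < x -> 0 < y -> H x = H y -> x = y.
Proof.
  intros hx hy E. destruct (Rtotal_order x y) as [h|[h|h]]; auto.
  - pose proof (H_increasing x y hx h). lra.
  - pose proof (H_increasing y x hy h). lra.
Qed.

Definition Hinv (s : R) := epsilon (inhabits 0) (fun rho => 0 < rho /\ H rho = s).
Definition H_range (s : R) := exists rho, 0 < rho /\ H rho = s.

Lemma Hinv_spec s : H_range s -> 0 < Hinv s /\ H (Hinv s) = s.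
Proof. intro h. unfold Hinv. apply (epsilon_spec (inhabits 0) (fun rho => 0 < rho /\ H rho = s)). exact h. Qed.

Lemma rhoW_Hinv a b : rhoW H a b = Hinv ((b - a) / 2).
Proof. reflexivity. Qed.

Lemma Hinv_between lo hi s : 0 < lo -> lo < hi -> H lo < s < H hi -> H_range s /\ lo < Hinv s < hi.
Proof.
  intros h0 h1 h2.
  destruct (IVT_interv (fun r => H r - s) lo hi) as [z [Hz Ez]]; auto.
  - intros a Ha. apply continuity_pt_minus; [apply H_cont; lra| apply continuity_pt_const; intros ??; auto].
  - lra. - lra.
  - assert (Hzs : H z = s) by lra.
    assert (S : H_range s) by (exists z; split; [lra|auto]).
    split; auto. destruct (Hinv_spec s S) as [r0 r1].
    assert (Hinv s = z) by (apply H_injective; lra).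
    rewrite H0. destruct Hz as [[Hz1|Hz1] [Hz2|Hz2]]; subst; try lra.
Qed.

Lemma H_range_open s0 : H_range s0 -> exists e, 0 < e /\ forall s, Rabs (s - s0) < e -> H_range s.
Proof.
  intro S. destruct (Hinv_spec s0 S) as [hr0 E0]. set (r0 := Hinv s0) in *.
  assert (A : H (r0 / 2) < s0) by (rewrite <- E0; apply H_increasing; lra).
  assert (B : s0 < H (2 * r0)) by (rewrite <- E0; apply H_increasing; lra).
  exists (Rmin (s0 - H (r0/2)) (H (2 * r0) - s0)). split; [apply Rmin_pos; lra|].
  intros s Hs.
  assert (Rabs (s - s0) < s0 - H (r0/2)) by (eapply Rlt_le_trans; [exact Hs| apply Rmin_l]).
  assert (Rabs (s - s0) < H (2 * r0) - s0) by (eapply Rlt_le_trans; [exact Hs| apply Rmin_r]).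
  apply (proj1 (Hinv_between (r0/2) (2 * r0) s ltac:(lra) ltac:(lra) ltac:(unfold Rabs in *; destruct Rcase_abs; lra))).
Qed.

Lemma Hinv_cont s0 : H_range s0 -> continuity_pt Hinv s0.
Proof.
  intro S. destruct (Hinv_spec s0 S) as [hr0 E0]. set (r0 := Hinv s0) in *.
  intros e He. simpl in *. unfold Rdist.
  set (e' := Rmin e (r0 / 2)).
  assert (He' : 0 < e') by (apply Rmin_pos; lra).
  assert (e'1 : e' <= e) by apply Rmin_l. assert (e'2 : e' <= r0 / 2) by apply Rmin_r.
  assert (A : H (r0 - e') < s0) by (rewrite <- E0; apply H_increasing; lra).
  assert (B : s0 < H (r0 + e')) by (rewrite <- E0; apply H_increasing; lra).
  exists (Rmin (s0 - H (r0 - e')) (H (r0 + e') - s0)). split; [apply Rmin_pos; lra|].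
  intros s [_ Hs]. unfold Rdist in Hs.
  assert (Rabs (s - s0) < s0 - H (r0 - e')) by (eapply Rlt_le_trans; [exact Hs| apply Rmin_l]).
  assert (Rabs (s - s0) < H (r0 + e') - s0) by (eapply Rlt_le_trans; [exact Hs| apply Rmin_r]).
  destruct (Hinv_between (r0 - e') (r0 + e') s ltac:(lra) ltac:(lra) ltac:(unfold Rabs in *; destruct Rcase_abs; lra)) as [_ Hb].
  unfold r0 in *. unfold Rabs; destruct Rcase_abs; lra.
Qed.

(* Inverse function theorem: (Hinv)' = 1 / H'(Hinv) = rho / c. *)
Lemma Hinv_deriv s0 : H_range s0 -> derivable_pt_lim Hinv s0 (Hinv s0 / cs p (Hinv s0)).
Proof.
  intro S. destruct (Hinv_spec s0 S) as [r0 E0].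
  set (D := cs p (Hinv s0) / Hinv s0).
  assert (D0 : 0 < D) by (apply Rdiv_lt_0_compat; auto; apply cs_pos; auto).
  replace (Hinv s0 / cs p (Hinv s0)) with (/ D) by (unfold D; field; split; [apply Rgt_not_eq, cs_pos; auto|lra]).
  intros e He.
  set (eta := Rmin (D / 2) (e * D * D / 2)).
  assert (Heta : 0 < eta) by (apply Rmin_pos; [lra| assert (0 < e * D) by (apply Rmult_lt_0_compat; lra); assert (0 < e * D * D) by (apply Rmult_lt_0_compat; lra); lra]).
  destruct (H_deriv (Hinv s0) r0 eta Heta) as [d1 Hd1].
  destruct (Hinv_cont s0 S d1 (cond_pos d1)) as [d2 [Hd2 Hd2']].
  destruct (H_range_open s0 S) as [d3 [Hd3 Hd3']].
  assert (Hm : 0 < Rmin d2 d3) by (apply Rmin_pos; auto).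
  exists (mkposreal _ Hm). simpl. intros h Hh0 Hh.
  assert (h2 : Rabs h < d2) by (eapply Rlt_le_trans; [exact Hh| apply Rmin_l]).
  assert (h3 : Rabs h < d3) by (eapply Rlt_le_trans; [exact Hh| apply Rmin_r]).
  assert (S' : H_range (s0 + h)) by (apply Hd3'; replace (s0 + h - s0) with h by ring; auto).
  destruct (Hinv_spec _ S') as [rh Eh].
  set (dl := Hinv (s0 + h) - Hinv s0).
  assert (dl0 : dl <> 0).
  { intro C. unfold dl in C. assert (Hinv (s0 + h) = Hinv s0) by lra. rewrite H0 in Eh. lra. }
  assert (dld : Rabs dl < d1).
  { assert (Hc := Hd2' (s0 + h)). simpl in Hc. unfold Rdist in Hc. unfold dl. apply Hc. split.
    - unfold D_x, no_cond. split; auto. lra.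
    - replace (s0 + h - s0) with h by ring. auto. }
  specialize (Hd1 dl dl0 dld).
  replace (Hinv s0 + dl) with (Hinv (s0 + h)) in Hd1 by (unfold dl; ring).
  rewrite Eh, E0 in Hd1. replace (s0 + h - s0) with h in Hd1 by ring.
  fold D in Hd1.
  (* q is the difference quotient of H between Hinv s0 and Hinv (s0 + h) *)
  set (q := h / dl) in *.
  assert (Hq1 : Rabs (q - D) < D / 2) by (eapply Rlt_le_trans; [exact Hd1| apply Rmin_l]).
  assert (Hq2 : Rabs (q - D) < e * D * D / 2) by (eapply Rlt_le_trans; [exact Hd1| apply Rmin_r]).
  assert (qpos : D / 2 < q) by (unfold Rabs in Hq1; destruct Rcase_abs; lra).
  replace (dl / h) with (/ q) by (unfold q; field; split; auto; intro C; subst q; unfold Rdiv in qpos; rewrite C, Rmult_0_l in qpos; lra).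
  apply inv_close; auto.
Qed.

Lemma Der_H rho : 0 < rho -> Der H rho = cs p rho / rho.
Proof. intro h. apply Der_of_lim, H_deriv; auto. Qed.

Section AlongPath.
Variables (A B : R -> R) (s0 dA dB : R).
Hypotheses (HA : derivable_pt_lim A s0 dA) (HB : derivable_pt_lim B s0 dB)
  (HS : H_range ((B s0 - A s0) / 2)).

Let rho := Hinv ((B s0 - A s0) / 2).
Let C := cs p rho.
Let ds := (dB - dA) / 2.

Lemma rho_path_pos : 0 < rho. Proof. apply (Hinv_spec _ HS). Qed.
Lemma cs_path_pos : 0 < C. Proof. apply cs_pos, rho_path_pos. Qed.

Lemma deriv_half_diff : derivable_pt_lim (fun s => (B s - A s) / 2) s0 ds.
Proof.
  unfold ds. apply (dlim_eq _ _ ((dB - dA) * / 2)); [|field].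
  apply (derivable_pt_lim_div_scal (fun s => B s - A s)). apply (dsub B A); auto.
Qed.

Lemma deriv_rho_path : derivable_pt_lim (fun s => Hinv ((B s - A s) / 2)) s0 (rho / C * ds).
Proof. apply (dcomp (fun s => (B s - A s) / 2) Hinv). apply deriv_half_diff. apply Hinv_deriv; auto. Qed.

Lemma deriv_cs_path : derivable_pt_lim (fun s => cs p (Hinv ((B s - A s) / 2))) s0 (Dcs rho * (rho / C * ds)).
Proof. apply (dcomp (fun s => Hinv ((B s - A s) / 2)) (cs p)). apply deriv_rho_path. apply cs_deriv, rho_path_pos. Qed.

Lemma deriv_u_path : derivable_pt_lim (fun s => uW (A s) (B s)) s0 ((dA + dB) / 2).
Proof.
  unfold uW. apply (dlim_eq _ _ ((dA + dB) * / 2)); [|field].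
  apply (derivable_pt_lim_div_scal (fun s => A s + B s)). apply (dadd A B); auto.
Qed.

Lemma deriv_lam1_path : derivable_pt_lim (fun s => lam1 p H (A s) (B s)) s0 ((dA + dB) / 2 - Dcs rho * (rho / C * ds)).
Proof. unfold lam1. apply (dsub (fun s => uW (A s) (B s)) (fun s => cs p (Hinv ((B s - A s) / 2)))); [apply deriv_u_path| apply deriv_cs_path]. Qed.

Lemma deriv_lam2_path : derivable_pt_lim (fun s => lam2 p H (A s) (B s)) s0 ((dA + dB) / 2 + Dcs rho * (rho / C * ds)).
Proof. unfold lam2. apply (dadd (fun s => uW (A s) (B s)) (fun s => cs p (Hinv ((B s - A s) / 2)))); [apply deriv_u_path| apply deriv_cs_path]. Qed.

Lemma deriv_fw_path (d : nat) (Rr : R -> R) dR : derivable_pt_lim Rr s0 dR -> Rr s0 <> 0 ->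
  derivable_pt_lim (fun s => fw p H d (Rr s) (A s) (B s)) s0
   ((((INR d - 1) * ((dA + dB) / 2) * C + (INR d - 1) * uW (A s0) (B s0) * (Dcs rho * (rho / C * ds))) * Rr s0
     - dR * ((INR d - 1) * uW (A s0) (B s0) * C)) / (Rr s0) ^ 2).
Proof.
  intros HR HR0. unfold fw.
  apply (ddiv (fun s => (INR d - 1) * uW (A s) (B s) * cs p (rhoW H (A s) (B s))) Rr); auto.
  apply (dlim_eq _ _ ((0 * uW (A s0) (B s0) + (INR d - 1) * ((dA + dB) / 2)) * C + (INR d - 1) * uW (A s0) (B s0) * (Dcs rho * (rho / C * ds)))).
  - apply (dmul (fun s => (INR d - 1) * uW (A s) (B s)) (fun s => cs p (Hinv ((B s - A s) / 2)))).
    + apply (dmul (fun _ => INR d - 1) (fun s => uW (A s) (B s))); [apply dconst| apply deriv_u_path].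
    + apply deriv_cs_path.
  - ring.
Qed.

Lemma H_range_near : exists e, 0 < e /\ forall s, Rabs (s - s0) < e -> H_range ((B s - A s) / 2).
Proof.
  destruct (H_range_open _ HS) as [e1 [He1 H1]].
  assert (Cs : continuity_pt (fun s => (B s - A s) / 2) s0).
  { apply derivable_continuous_pt. exists ds. apply deriv_half_diff. }
  destruct (Cs e1 He1) as [e [He He']].
  exists e. split; auto. intros s Hs.
  destruct (Req_dec s s0) as [E|Ne]; [subst; auto|].
  apply H1. apply (He' s). split; [split; auto; unfold no_cond; auto| simpl; unfold Rdist; auto].
Qed.

(* h = ln (H'(rho)) / 2 = ln (c / rho) / 2. *)
Lemma deriv_hW_path : derivable_pt_lim (fun s => hW p H (A s) (B s)) s0
  ((Dcs rho / C - / rho) / 2 * (rho / C * ds)).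
Proof.
  destruct H_range_near as [e [He HSe]].
  apply dlim_local with (f := fun s => ln (cs p (Hinv ((B s - A s) / 2)) / Hinv ((B s - A s) / 2)) / 2) (e := e); auto.
  - intros s Hs. unfold hW. rewrite rhoW_Hinv. rewrite Der_H; auto. apply (Hinv_spec _ (HSe s Hs)).
  - apply (dlim_eq _ _ ((/ (C / rho) * ((Dcs rho * (rho / C * ds) * rho - (rho / C * ds) * C) / rho ^ 2)) / 2)).
    + apply (derivable_pt_lim_div_scal (fun s => ln (cs p (Hinv ((B s - A s) / 2)) / Hinv ((B s - A s) / 2)))).
      apply (dcomp (fun s => cs p (Hinv ((B s - A s) / 2)) / Hinv ((B s - A s) / 2)) ln).
      * apply (ddiv (fun s => cs p (Hinv ((B s - A s) / 2))) (fun s => Hinv ((B s - A s) / 2))).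
        -- pose proof rho_path_pos; unfold rho in *; lra.
        -- apply deriv_cs_path.
        -- apply deriv_rho_path.
      * apply derivable_pt_lim_ln. apply Rdiv_lt_0_compat; [apply cs_path_pos| apply rho_path_pos].
    + pose proof rho_path_pos. pose proof cs_path_pos. unfold rho, C in *. field. lra.
Qed.
End AlongPath.
End DensityInversion.

(** At a state (a, b) with rho = Hinv ((b - a) / 2), C = c(rho), K = c'(rho),
   the partial derivatives of lam_i, h, f are obtained from the path lemmas
   applied to the coordinate lines s |-> (s, b) and s |-> (a, s). *)

Section StatePartials.
Variables (p H : R -> R) (d : nat).
Hypotheses (Hp : pressure_ok p) (HH : H_is_primitive p H).

Lemma Wdom_open a b : Wdom H a b -> open_at (Wdom H) a b.
Proof.
  intro W. destruct (H_range_open p H Hp HH _ W) as [e [He He']].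
  exists e. split; auto. intros u v Hu Hv. apply He'.
  replace ((v - u) / 2 - (b - a) / 2) with ((v - b) / 2 - (u - a) / 2) by field.
  unfold Rabs in *; repeat destruct Rcase_abs; lra.
Qed.

Variables (a b : R).
Hypothesis W : Wdom H a b.
Let rho := Hinv H ((b - a) / 2).
Let C := cs p rho.
Let K := Dcs p rho.

(* The formulas are kept in the unsimplified form produced by the path lemmas. *)
Lemma D1_lam1 : D1 (lam1 p H) a b = (1 + 0) / 2 - K * (rho / C * ((0 - 1) / 2)).
Proof. apply Der_of_lim. exact (deriv_lam1_path p H Hp HH _ _ a 1 0 (did a) (dconst b a) W). Qed.
Lemma D2_lam2 : D2 (lam2 p H) a b = (0 + 1) / 2 + K * (rho / C * ((1 - 0) / 2)).
Proof. apply Der_of_lim. exact (deriv_lam2_path p H Hp HH _ _ b 0 1 (dconst a b) (did b) W). Qed.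
Lemma D1_hW : D1 (hW p H) a b = (K / C - / rho) / 2 * (rho / C * ((0 - 1) / 2)).
Proof. apply Der_of_lim. exact (deriv_hW_path p H Hp HH _ _ a 1 0 (did a) (dconst b a) W). Qed.
Lemma D2_hW : D2 (hW p H) a b = (K / C - / rho) / 2 * (rho / C * ((1 - 0) / 2)).
Proof. apply Der_of_lim. exact (deriv_hW_path p H Hp HH _ _ b 0 1 (dconst a b) (did b) W). Qed.

Variable r : R.
Hypothesis Hr : 0 < r.
Let dd := INR d - 1.
Let u := uW a b.

Lemma D1_fw : D1 (fw p H d r) a b =
  ((dd * ((1 + 0) / 2) * C + dd * u * (K * (rho / C * ((0 - 1) / 2)))) * r - 0 * (dd * u * C)) / r ^ 2.
Proof. apply Der_of_lim. exact (deriv_fw_path p H Hp HH _ _ a 1 0 (did a) (dconst b a) W d (fun _ => r) 0 (dconst r a) ltac:(lra)). Qed.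
Lemma D2_fw : D2 (fw p H d r) a b =
  ((dd * ((0 + 1) / 2) * C + dd * u * (K * (rho / C * ((1 - 0) / 2)))) * r - 0 * (dd * u * C)) / r ^ 2.
Proof. apply Der_of_lim. exact (deriv_fw_path p H Hp HH _ _ b 0 1 (dconst a b) (did b) W d (fun _ => r) 0 (dconst r b) ltac:(lra)). Qed.
Lemma Dr_fw : Der (fun s => fw p H d s a b) r =
  ((dd * ((0 + 0) / 2) * C + dd * u * (K * (rho / C * ((0 - 0) / 2)))) * r - 1 * (dd * u * C)) / r ^ 2.
Proof.
  apply Der_of_lim. exact (deriv_fw_path p H Hp HH (fun _ => a) (fun _ => b) r 0 0 (dconst a r) (dconst b r) W d (fun s => s) 1 (did r) ltac:(lra)).
Qed.

Lemma partials_div_r (g : R -> R -> R) gx gy : C1_with (Wdom H) g gx gy ->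
  D1 (fun x y => g x y / r) a b = gx a b / r /\ D2 (fun x y => g x y / r) a b = gy a b / r /\
  Der (fun s => g a b / s) r = - g a b / r ^ 2.
Proof.
  intro Hg. pose proof (Wdom_open a b W) as O. split; [|split].
  - apply Der_of_lim. apply (derivable_pt_lim_div_scal (fun s => g s b)). apply C1_deriv_x with (S := Wdom H) (Fy := gy); auto.
  - apply Der_of_lim. apply (derivable_pt_lim_div_scal (fun s => g a s)). apply C1_deriv_y with (S := Wdom H) (Fx := gx); auto.
  - apply Der_of_lim. apply (dlim_eq _ _ ((0 * r - 1 * g a b) / r ^ 2)).
    + apply (ddiv (fun _ => g a b) (fun s => s)); [lra| apply dconst| apply did].
    + field; lra.
Qed.

Lemma D2_exp_hW_mul (g : R -> R -> R) gx gy : C1_with (Wdom H) g gx gy ->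
  D2 (fun x y => exp (hW p H x y) * (g x y / r)) a b =
  exp (hW p H a b) * ((K / C - / rho) / 2 * (rho / C * ((1 - 0) / 2))) * (g a b / r) + exp (hW p H a b) * (gy a b / r).
Proof.
  intro Hg. pose proof (Wdom_open a b W) as O. apply Der_of_lim.
  apply (dmul (fun s => exp (hW p H a s)) (fun s => g a s / r)).
  - apply (dexp (fun s => hW p H a s)). exact (deriv_hW_path p H Hp HH _ _ b 0 1 (dconst a b) (did b) W).
  - apply (derivable_pt_lim_div_scal (fun s => g a s)). apply C1_deriv_y with (S := Wdom H) (Fx := gx); auto.
Qed.
Lemma D1_exp_hW_mul (g : R -> R -> R) gx gy : C1_with (Wdom H) g gx gy ->
  D1 (fun x y => exp (hW p H x y) * (g x y / r)) a b =
  exp (hW p H a b) * ((K / C - / rho) / 2 * (rho / C * ((0 - 1) / 2))) * (g a b / r) + exp (hW p H a b) * (gx a b / r).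
Proof.
  intro Hg. pose proof (Wdom_open a b W) as O. apply Der_of_lim.
  apply (dmul (fun s => exp (hW p H s b)) (fun s => g s b / r)).
  - apply (dexp (fun s => hW p H s b)). exact (deriv_hW_path p H Hp HH _ _ a 1 0 (did a) (dconst b a) W).
  - apply (derivable_pt_lim_div_scal (fun s => g s b)). apply C1_deriv_x with (S := Wdom H) (Fy := gy); auto.
Qed.
End StatePartials.

(** w1, w2 are C^2 on Omega with partials (Fx_i, Fy_i) = (d_t w_i, d_r w_i)
   and second partials Fx_i x, Fx_i y, Fy_i x, Fy_i y.  At interior points
   the PDE holds with these partials; differentiating it in r expresses
   d_r d_t w_i, which by Schwarz equals d_t d_r w_i. *)

Definition pde_holds (p H : R -> R) (d : nat) (Tcal : R) (w1 w2 : R -> R -> R) : Prop :=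
  forall t r, Omega Tcal t r ->
     exists d1t d1r d2t d2r,
       has_deriv_within (fun s => Omega Tcal s r) (fun s => w1 s r) t d1t /\
       has_deriv_within (fun s => Omega Tcal t s) (fun s => w1 t s) r d1r /\
       has_deriv_within (fun s => Omega Tcal s r) (fun s => w2 s r) t d2t /\
       has_deriv_within (fun s => Omega Tcal t s) (fun s => w2 t s) r d2r /\
       d1t + lam1 p H (w1 t r) (w2 t r) * d1r = fw p H d r (w1 t r) (w2 t r) /\
       d2t + lam2 p H (w1 t r) (w2 t r) * d2r = - fw p H d r (w1 t r) (w2 t r).

Section DifferentiatedPDE.
Variables (p H : R -> R) (d : nat) (Tcal : R) (w1 w2 : R -> R -> R).
Hypotheses (Hp : pressure_ok p) (HH : H_is_primitive p H).
Variables (Fx1 Fy1 Fx1x Fx1y Fy1x Fy1y Fx2 Fy2 Fx2x Fx2y Fy2x Fy2y : R -> R -> R).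
Hypotheses (C1w1 : C1_with (Omega Tcal) w1 Fx1 Fy1) (C1x1 : C1_with (Omega Tcal) Fx1 Fx1x Fx1y)
  (C1y1 : C1_with (Omega Tcal) Fy1 Fy1x Fy1y)
  (C1w2 : C1_with (Omega Tcal) w2 Fx2 Fy2) (C1x2 : C1_with (Omega Tcal) Fx2 Fx2x Fx2y)
  (C1y2 : C1_with (Omega Tcal) Fy2 Fy2x Fy2y).
Hypothesis Hdom : forall t r, Omega Tcal t r -> Wdom H (w1 t r) (w2 t r).
Hypothesis HPDE : pde_holds p H d Tcal w1 w2.

Definition Omega_int t r := 0 < t < Tcal /\ 0 < r.

Lemma Omega_int_near t r : Omega_int t r -> exists e, 0 < e /\ forall u v, Rabs (u - t) < e -> Rabs (v - r) < e -> Omega_int u v.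
Proof.
  intros [[h1 h2] h3]. exists (Rmin (Rmin t (Tcal - t)) r). split.
  - apply Rmin_pos; [apply Rmin_pos|]; lra.
  - intros u v Hu Hv.
    assert (Rabs (u - t) < t) by (eapply Rlt_le_trans; [exact Hu|]; eapply Rle_trans; [apply Rmin_l| apply Rmin_l]).
    assert (Rabs (u - t) < Tcal - t) by (eapply Rlt_le_trans; [exact Hu|]; eapply Rle_trans; [apply Rmin_l| apply Rmin_r]).
    assert (Rabs (v - r) < r) by (eapply Rlt_le_trans; [exact Hv| apply Rmin_r]).
    unfold Omega_int. unfold Rabs in *; repeat destruct Rcase_abs; lra.
Qed.

Lemma Omega_int_Omega t r : Omega_int t r -> Omega Tcal t r.
Proof. intros [h1 h2]. unfold Omega. lra. Qed.

Lemma Omega_int_open t r : Omega_int t r -> open_at (Omega Tcal) t r.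
Proof.
  intro Hi. destruct (Omega_int_near t r Hi) as [e [He Hn]].
  exists e. split; auto. intros u v Hu Hv. apply Omega_int_Omega, Hn; auto.
Qed.

Lemma pde_partials t r : Omega_int t r ->
  Fx1 t r + lam1 p H (w1 t r) (w2 t r) * Fy1 t r = fw p H d r (w1 t r) (w2 t r) /\
  Fx2 t r + lam2 p H (w1 t r) (w2 t r) * Fy2 t r = - fw p H d r (w1 t r) (w2 t r).
Proof.
  intro Hi. pose proof (Omega_int_open t r Hi) as O. destruct O as [e [He Ho]].
  destruct (HPDE t r (Omega_int_Omega t r Hi)) as [d1t [d1r [d2t [d2r [D1 [D2 [D3 [D4 [E1 E2]]]]]]]]].
  assert (Z : Rabs (t - t) < e) by (rewrite Rminus_eq_0, Rabs_R0; lra).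
  assert (Zr : Rabs (r - r) < e) by (rewrite Rminus_eq_0, Rabs_R0; lra).
  assert (O : open_at (Omega Tcal) t r) by (exists e; auto).
  assert (e1 : d1t = Fx1 t r).
  { apply (uniqueness_limite (fun s => w1 s r) t). apply (deriv_within_interior (fun s => Omega Tcal s r) _ _ _ e He); auto. apply C1_deriv_x with (S := Omega Tcal) (Fy := Fy1); auto. }
  assert (e2 : d1r = Fy1 t r).
  { apply (uniqueness_limite (fun s => w1 t s) r). apply (deriv_within_interior (fun s => Omega Tcal t s) _ _ _ e He); auto. apply C1_deriv_y with (S := Omega Tcal) (Fx := Fx1); auto. }
  assert (e3 : d2t = Fx2 t r).
  { apply (uniqueness_limite (fun s => w2 s r) t). apply (deriv_within_interior (fun s => Omega Tcal s r) _ _ _ e He); auto. apply C1_deriv_x with (S := Omega Tcal) (Fy := Fy2); auto. }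
  assert (e4 : d2r = Fy2 t r).
  { apply (uniqueness_limite (fun s => w2 t s) r). apply (deriv_within_interior (fun s => Omega Tcal t s) _ _ _ e He); auto. apply C1_deriv_y with (S := Omega Tcal) (Fx := Fx2); auto. }
  subst. auto.
Qed.

(* r-derivative of  d_t w1 = f - lam1 d_r w1. *)
Lemma pde1_r_derivative t r : Omega_int t r ->
  let W1 := w1 t r in let W2 := w2 t r in
  let rho := Hinv H ((W2 - W1) / 2) in let C := cs p rho in let K := Dcs p rho in
  let q := Fy1 t r in let p2 := Fy2 t r in let u := uW W1 W2 in let dd := INR d - 1 in
  Fx1y t r = ((dd * ((q + p2) / 2) * C + dd * u * (K * (rho / C * ((p2 - q) / 2)))) * r - 1 * (dd * u * C)) / r ^ 2
     - ((q + p2) / 2 - K * (rho / C * ((p2 - q) / 2))) * q - lam1 p H W1 W2 * Fy1y t r.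
Proof.
  intros Hi. intros.
  pose proof (Omega_int_open t r Hi) as O.
  destruct (Omega_int_near t r Hi) as [e [He Hn]].
  assert (Z : Rabs (t - t) < e) by (rewrite Rminus_eq_0, Rabs_R0; lra).
  assert (DA : derivable_pt_lim (fun v => w1 t v) r q) by (apply C1_deriv_y with (S := Omega Tcal) (Fx := Fx1); auto).
  assert (DB : derivable_pt_lim (fun v => w2 t v) r p2) by (apply C1_deriv_y with (S := Omega Tcal) (Fx := Fx2); auto).
  assert (SS : H_range H (((fun v => w2 t v) r - (fun v => w1 t v) r) / 2)) by (apply Hdom, Omega_int_Omega; auto).
  assert (Dr : derivable_pt_lim (fun v => Fx1 t v) r (Fx1y t r)) by (apply C1_deriv_y with (S := Omega Tcal) (Fx := Fx1x); auto).
  apply (uniqueness_limite (fun v => Fx1 t v) r); auto.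
  apply dlim_local with (f := fun v => fw p H d v (w1 t v) (w2 t v) - lam1 p H (w1 t v) (w2 t v) * Fy1 t v) (e := e); auto.
  - intros v Hv. pose proof (pde_partials t v (Hn t v Z Hv)) as [P1 _]. lra.
  - eapply dlim_eq; [|apply Rminus_plus_distr].
    apply (dsub (fun v => fw p H d v (w1 t v) (w2 t v)) (fun v => lam1 p H (w1 t v) (w2 t v) * Fy1 t v)).
    + exact (deriv_fw_path p H Hp HH _ _ r q p2 DA DB SS d (fun v => v) 1 (did r) ltac:(destruct Hi; lra)).
    + apply dlim_eq with (((q + p2) / 2 - K * (rho / C * ((p2 - q) / 2))) * q + lam1 p H W1 W2 * Fy1y t r).
      * apply (dmul (fun v => lam1 p H (w1 t v) (w2 t v)) (fun v => Fy1 t v)).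
        -- exact (deriv_lam1_path p H Hp HH _ _ r q p2 DA DB SS).
        -- apply C1_deriv_y with (S := Omega Tcal) (Fx := Fy1x); auto.
      * reflexivity.
Qed.

(* r-derivative of  d_t w2 = - f - lam2 d_r w2. *)
Lemma pde2_r_derivative t r : Omega_int t r ->
  let W1 := w1 t r in let W2 := w2 t r in
  let rho := Hinv H ((W2 - W1) / 2) in let C := cs p rho in let K := Dcs p rho in
  let q1 := Fy1 t r in let q := Fy2 t r in let u := uW W1 W2 in let dd := INR d - 1 in
  Fx2y t r = - (((dd * ((q1 + q) / 2) * C + dd * u * (K * (rho / C * ((q - q1) / 2)))) * r - 1 * (dd * u * C)) / r ^ 2)
     - ((q1 + q) / 2 + K * (rho / C * ((q - q1) / 2))) * q - lam2 p H W1 W2 * Fy2y t r.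
Proof.
  intros Hi. intros.
  pose proof (Omega_int_open t r Hi) as O.
  destruct (Omega_int_near t r Hi) as [e [He Hn]].
  assert (Z : Rabs (t - t) < e) by (rewrite Rminus_eq_0, Rabs_R0; lra).
  assert (DA : derivable_pt_lim (fun v => w1 t v) r q1) by (apply C1_deriv_y with (S := Omega Tcal) (Fx := Fx1); auto).
  assert (DB : derivable_pt_lim (fun v => w2 t v) r q) by (apply C1_deriv_y with (S := Omega Tcal) (Fx := Fx2); auto).
  assert (SS : H_range H (((fun v => w2 t v) r - (fun v => w1 t v) r) / 2)) by (apply Hdom, Omega_int_Omega; auto).
  assert (Dr : derivable_pt_lim (fun v => Fx2 t v) r (Fx2y t r)) by (apply C1_deriv_y with (S := Omega Tcal) (Fx := Fx2x); auto).
  apply (uniqueness_limite (fun v => Fx2 t v) r); auto.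
  apply dlim_local with (f := fun v => - fw p H d v (w1 t v) (w2 t v) - lam2 p H (w1 t v) (w2 t v) * Fy2 t v) (e := e); auto.
  - intros v Hv. pose proof (pde_partials t v (Hn t v Z Hv)) as [_ P2]. lra.
  - eapply dlim_eq; [|apply Rminus_plus_distr].
    apply (dsub (fun v => - fw p H d v (w1 t v) (w2 t v)) (fun v => lam2 p H (w1 t v) (w2 t v) * Fy2 t v)).
    + apply (dopp (fun v => fw p H d v (w1 t v) (w2 t v))).
      exact (deriv_fw_path p H Hp HH _ _ r q1 q DA DB SS d (fun v => v) 1 (did r) ltac:(destruct Hi; lra)).
    + apply dlim_eq with (((q1 + q) / 2 + K * (rho / C * ((q - q1) / 2))) * q + lam2 p H W1 W2 * Fy2y t r).
      * apply (dmul (fun v => lam2 p H (w1 t v) (w2 t v)) (fun v => Fy2 t v)).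
        -- exact (deriv_lam2_path p H Hp HH _ _ r q1 q DA DB SS).
        -- apply C1_deriv_y with (S := Omega Tcal) (Fx := Fy2x); auto.
      * reflexivity.
Qed.

Lemma schwarz_w1 t r : Omega_int t r -> Fy1x t r = Fx1y t r.
Proof. intro Hi. apply (C1_schwarz (Omega Tcal) w1 Fx1 Fy1 Fx1x Fx1y Fy1x Fy1y); auto. apply Omega_int_open; auto. Qed.
Lemma schwarz_w2 t r : Omega_int t r -> Fy2x t r = Fx2y t r.
Proof. intro Hi. apply (C1_schwarz (Omega Tcal) w2 Fx2 Fy2 Fx2x Fx2y Fy2x Fy2y); auto. apply Omega_int_open; auto. Qed.
End DifferentiatedPDE.

(** * The Riccati equations for v1 and v2 along characteristics

   Along a curve X with X' = l, V = e^{h(w)} (d_r w_i + g(w) / X) is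
   differentiated by the chain rule; when l = lam_i and g = phi (resp. psi)
   solves its defining equation, substituting the PDE, its r-derivative and
   Schwarz's theorem turns V' into a0 V^2 + a1 V + a2 (resp. with b_j). *)

Section RiccatiODE.
Variables (p H : R -> R) (d : nat) (Tcal : R) (w1 w2 : R -> R -> R).
Hypotheses (Hp : pressure_ok p) (HH : H_is_primitive p H).
Variables (Fx1 Fy1 Fx1x Fx1y Fy1x Fy1y Fx2 Fy2 Fx2x Fx2y Fy2x Fy2y : R -> R -> R).
Hypotheses (C1w1 : C1_with (Omega Tcal) w1 Fx1 Fy1) (C1x1 : C1_with (Omega Tcal) Fx1 Fx1x Fx1y)
  (C1y1 : C1_with (Omega Tcal) Fy1 Fy1x Fy1y)
  (C1w2 : C1_with (Omega Tcal) w2 Fx2 Fy2) (C1x2 : C1_with (Omega Tcal) Fx2 Fx2x Fx2y)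
  (C1y2 : C1_with (Omega Tcal) Fy2 Fy2x Fy2y).
Hypothesis Hdom : forall t r, Omega Tcal t r -> Wdom H (w1 t r) (w2 t r).
Hypothesis HPDE : pde_holds p H d Tcal w1 w2.

Lemma deriv_weighted_along (Q Qx Qy : R -> R -> R) (g gx gy : R -> R -> R)
  (CQ : C1_with (Omega Tcal) Q Qx Qy) (Cg : C1_with (Wdom H) g gx gy)
  (X : R -> R) s0 l : Omega_int Tcal s0 (X s0) -> derivable_pt_lim X s0 l ->
  let r := X s0 in let W1 := w1 s0 r in let W2 := w2 s0 r in
  let dW1 := Fx1 s0 r + Fy1 s0 r * l in let dW2 := Fx2 s0 r + Fy2 s0 r * l in
  let rho := Hinv H ((W2 - W1) / 2) in let C := cs p rho in
  derivable_pt_lim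
    (fun s => exp (hW p H (w1 s (X s)) (w2 s (X s))) * (Q s (X s) + g (w1 s (X s)) (w2 s (X s)) / X s)) s0
    (exp (hW p H W1 W2) * ((Dcs p rho / C - / rho) / 2 * (rho / C * ((dW2 - dW1) / 2)))
       * (Q s0 r + g W1 W2 / r)
     + exp (hW p H W1 W2) * ((Qx s0 r + Qy s0 r * l)
       + ((gx W1 W2 * dW1 + gy W1 W2 * dW2) * r - l * g W1 W2) / r ^ 2)).
Proof.
  intros Hi HX r W1 W2 dW1 dW2 rho C.
  assert (Hr : 0 < r) by (destruct Hi; auto).
  pose proof (Omega_int_open Tcal s0 r Hi) as O.
  assert (Wd : Wdom H W1 W2) by (apply Hdom, Omega_int_Omega; auto).
  assert (DW1 : derivable_pt_lim (fun s => w1 s (X s)) s0 (Fx1 s0 r * 1 + Fy1 s0 r * l)).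
  { apply (C1_chain_rule (Omega Tcal) w1 Fx1 Fy1 C1w1 (fun s => s) X); auto. apply did. }
  assert (DW2 : derivable_pt_lim (fun s => w2 s (X s)) s0 (Fx2 s0 r * 1 + Fy2 s0 r * l)).
  { apply (C1_chain_rule (Omega Tcal) w2 Fx2 Fy2 C1w2 (fun s => s) X); auto. apply did. }
  assert (DQ : derivable_pt_lim (fun s => Q s (X s)) s0 (Qx s0 r * 1 + Qy s0 r * l)).
  { apply (C1_chain_rule (Omega Tcal) Q Qx Qy CQ (fun s => s) X); auto. apply did. }
  pose proof (deriv_hW_path p H Hp HH _ _ s0 _ _ DW1 DW2 Wd) as Dh. simpl in Dh.
  assert (Dg : derivable_pt_lim (fun s => g (w1 s (X s)) (w2 s (X s))) s0
            (gx W1 W2 * (Fx1 s0 r * 1 + Fy1 s0 r * l) + gy W1 W2 * (Fx2 s0 r * 1 + Fy2 s0 r * l))).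
  { apply (C1_chain_rule (Wdom H) g gx gy Cg (fun s => w1 s (X s)) (fun s => w2 s (X s))); auto.
    apply (Wdom_open p H Hp HH); auto. }
  eapply dlim_eq.
  { apply (dmul (fun s => exp (hW p H (w1 s (X s)) (w2 s (X s))))
                (fun s => Q s (X s) + g (w1 s (X s)) (w2 s (X s)) / X s)).
    - apply (dexp (fun s => hW p H (w1 s (X s)) (w2 s (X s)))). exact Dh.
    - apply (dadd (fun s => Q s (X s)) (fun s => g (w1 s (X s)) (w2 s (X s)) / X s)); [exact DQ|].
      apply (ddiv (fun s => g (w1 s (X s)) (w2 s (X s))) X); [unfold r in Hr; lra| exact Dg| exact HX]. }
  unfold dW1, dW2, C, rho, W1, W2, r. rewrite !Rmult_1_r. reflexivity.
Qed.

Variables (phi phx phy : R -> R -> R).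
Hypothesis Cphi : C1_with (Wdom H) phi phx phy.
Hypothesis Hphi2 : forall r a b, 0 < r -> Wdom H a b ->
    D2 (fun x y => exp (hW p H x y) * (phi x y / r)) a b =
    - exp (hW p H a b) * D2 (fw p H d r) a b / (lam1 p H a b - lam2 p H a b).

Lemma riccati_ode_v1 (X : R -> R) s0 : Omega_int Tcal s0 (X s0) ->
  derivable_pt_lim X s0 (lam1 p H (w1 s0 (X s0)) (w2 s0 (X s0))) ->
  let V := fun s => exp (hW p H (w1 s (X s)) (w2 s (X s)))
                    * (Fy1 s (X s) + phi (w1 s (X s)) (w2 s (X s)) / X s) in
  derivable_pt_lim V s0
    (a0W p H (w1 s0 (X s0)) (w2 s0 (X s0)) * V s0 ^ 2
     + a1W p H d phi (X s0) (w1 s0 (X s0)) (w2 s0 (X s0)) * V s0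
     + a2W p H d phi (X s0) (w1 s0 (X s0)) (w2 s0 (X s0))).
Proof.
  intros Hi HX V. unfold V.
  eapply dlim_eq; [exact (deriv_weighted_along Fy1 Fy1x Fy1y phi phx phy C1y1 Cphi X s0 _ Hi HX)|].
  cbv zeta.
  set (r := X s0) in *. set (W1 := w1 s0 r). set (W2 := w2 s0 r). set (l := lam1 p H W1 W2).
  assert (Hr : 0 < r) by (destruct Hi; auto).
  assert (Wd : Wdom H W1 W2) by (apply Hdom, Omega_int_Omega; auto).
  (* the PDE, its r-derivative and Schwarz eliminate all t-derivatives *)
  destruct (pde_partials p H d Tcal w1 w2 Fx1 Fy1 Fx2 Fy2 C1w1 C1w2 HPDE s0 r Hi) as [P1 P2].
  pose proof (pde1_r_derivative p H d Tcal w1 w2 Hp HH Fx1 Fy1 Fx1x Fx1y Fy1x Fy1y Fx2 Fy2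
                C1w1 C1x1 C1y1 C1w2 Hdom HPDE s0 r Hi) as DP.
  pose proof (schwarz_w1 Tcal w1 Fx1 Fy1 Fx1x Fx1y Fy1x Fy1y C1w1 C1x1 C1y1 s0 r Hi) as SW.
  cbv zeta in DP. fold W1 W2 in P1, P2, DP. fold l in P1, DP.
  (* the equation for phi gives phy in terms of the other quantities *)
  pose proof (Hphi2 r W1 W2 Hr Wd) as Ph.
  rewrite (D2_exp_hW_mul p H Hp HH W1 W2 Wd r phi phx phy Cphi) in Ph.
  rewrite (D2_fw p H d Hp HH W1 W2 Wd r Hr) in Ph.
  destruct (partials_div_r p H Hp HH W1 W2 Wd r Hr phi phx phy Cphi) as [Q1 [Q2 Q3]].
  unfold a0W, a1W, a2W.
  rewrite (D1_lam1 p H Hp HH W1 W2 Wd), (D1_fw p H d Hp HH W1 W2 Wd r Hr), (D1_hW p H Hp HH W1 W2 Wd),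
    (D2_hW p H Hp HH W1 W2 Wd), (Dr_fw p H d Hp HH W1 W2 Wd r Hr), Q1, Q2, Q3.
  rewrite exp_Ropp, SW, DP.
  assert (E1 : Fx1 s0 r = fw p H d r W1 W2 - l * Fy1 s0 r) by lra.
  assert (E2 : Fx2 s0 r = - fw p H d r W1 W2 - lam2 p H W1 W2 * Fy2 s0 r) by lra.
  rewrite E1, E2.
  clear DP SW P1 P2 E1 E2 Q1 Q2 Q3.
  unfold l in *. unfold lam1, lam2, fw in *. rewrite !rhoW_Hinv in *.
  set (rho := Hinv H ((W2 - W1) / 2)) in *.
  set (C := cs p rho) in *. set (K := Dcs p rho) in *. set (E := exp (hW p H W1 W2)) in *.
  set (u := uW W1 W2) in *.
  assert (rp : 0 < rho) by (apply (Hinv_spec H _ Wd)).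
  assert (Cp0 : 0 < C) by (apply cs_pos; auto).
  assert (Ep : 0 < E) by apply exp_pos.
  match type of Ph with ?L = ?R =>
    assert (Hphy : phy W1 W2 = (R - E * ((K / C - / rho) / 2 * (rho / C * ((1 - 0) / 2))) * (phi W1 W2 / r)) * r / E)
      by (rewrite <- Ph; field; lra) end.
  rewrite Hphy.
  field. repeat split; lra.
Qed.

Variables (psi psx psy : R -> R -> R).
Hypothesis Cpsi : C1_with (Wdom H) psi psx psy.
Hypothesis Hpsi2 : forall r a b, 0 < r -> Wdom H a b ->
    D1 (fun x y => exp (hW p H x y) * (psi x y / r)) a b =
    exp (hW p H a b) * D1 (fw p H d r) a b / (lam2 p H a b - lam1 p H a b).

Lemma riccati_ode_v2 (X : R -> R) s0 : Omega_int Tcal s0 (X s0) ->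
  derivable_pt_lim X s0 (lam2 p H (w1 s0 (X s0)) (w2 s0 (X s0))) ->
  let V := fun s => exp (hW p H (w1 s (X s)) (w2 s (X s)))
                    * (Fy2 s (X s) + psi (w1 s (X s)) (w2 s (X s)) / X s) in
  derivable_pt_lim V s0
    (b0W p H (w1 s0 (X s0)) (w2 s0 (X s0)) * V s0 ^ 2
     + b1W p H d psi (X s0) (w1 s0 (X s0)) (w2 s0 (X s0)) * V s0
     + b2W p H d psi (X s0) (w1 s0 (X s0)) (w2 s0 (X s0))).
Proof.
  intros Hi HX V. unfold V.
  eapply dlim_eq; [exact (deriv_weighted_along Fy2 Fy2x Fy2y psi psx psy C1y2 Cpsi X s0 _ Hi HX)|].
  cbv zeta.
  set (r := X s0) in *. set (W1 := w1 s0 r). set (W2 := w2 s0 r). set (l := lam2 p H W1 W2).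
  assert (Hr : 0 < r) by (destruct Hi; auto).
  assert (Wd : Wdom H W1 W2) by (apply Hdom, Omega_int_Omega; auto).
  (* the PDE, its r-derivative and Schwarz eliminate all t-derivatives *)
  destruct (pde_partials p H d Tcal w1 w2 Fx1 Fy1 Fx2 Fy2 C1w1 C1w2 HPDE s0 r Hi) as [P1 P2].
  pose proof (pde2_r_derivative p H d Tcal w1 w2 Hp HH Fx1 Fy1 Fx2 Fy2 Fx2x Fx2y Fy2x Fy2y
                C1w1 C1w2 C1x2 C1y2 Hdom HPDE s0 r Hi) as DP.
  pose proof (schwarz_w2 Tcal w2 Fx2 Fy2 Fx2x Fx2y Fy2x Fy2y C1w2 C1x2 C1y2 s0 r Hi) as SW.
  cbv zeta in DP. fold W1 W2 in P1, P2, DP. fold l in P2, DP.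
  (* the equation for psi gives psx in terms of the other quantities *)
  pose proof (Hpsi2 r W1 W2 Hr Wd) as Ph.
  rewrite (D1_exp_hW_mul p H Hp HH W1 W2 Wd r psi psx psy Cpsi) in Ph.
  rewrite (D1_fw p H d Hp HH W1 W2 Wd r Hr) in Ph.
  destruct (partials_div_r p H Hp HH W1 W2 Wd r Hr psi psx psy Cpsi) as [Q1 [Q2 Q3]].
  unfold b0W, b1W, b2W.
  rewrite (D2_lam2 p H Hp HH W1 W2 Wd), (D2_fw p H d Hp HH W1 W2 Wd r Hr), (D1_hW p H Hp HH W1 W2 Wd),
    (D2_hW p H Hp HH W1 W2 Wd), (Dr_fw p H d Hp HH W1 W2 Wd r Hr), Q1, Q2, Q3.
  rewrite exp_Ropp, SW, DP.
  assert (E1 : Fx1 s0 r = fw p H d r W1 W2 - lam1 p H W1 W2 * Fy1 s0 r) by lra.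
  assert (E2 : Fx2 s0 r = - fw p H d r W1 W2 - l * Fy2 s0 r) by lra.
  rewrite E1, E2.
  clear DP SW P1 P2 E1 E2 Q1 Q2 Q3.
  unfold l in *. unfold lam1, lam2, fw in *. rewrite !rhoW_Hinv in *.
  set (rho := Hinv H ((W2 - W1) / 2)) in *.
  set (C := cs p rho) in *. set (K := Dcs p rho) in *. set (E := exp (hW p H W1 W2)) in *.
  set (u := uW W1 W2) in *.
  assert (rp : 0 < rho) by (apply (Hinv_spec H _ Wd)).
  assert (Cp0 : 0 < C) by (apply cs_pos; auto).
  assert (Ep : 0 < E) by apply exp_pos.
  match type of Ph with ?L = ?R =>
    assert (Hpsx : psx W1 W2 = (R - E * ((K / C - / rho) / 2 * (rho / C * ((0 - 1) / 2))) * (psi W1 W2 / r)) * r / E)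
      by (rewrite <- Ph; field; lra) end.
  rewrite Hpsx.
  field. repeat split; lra.
Qed.
End RiccatiODE.

Lemma c2d_within F x y : continuity_2d_pt F x y -> cont2_within (fun _ _ => True) F x y.
Proof.
  intros HF e He. destruct (HF (mkposreal e He)) as [dl Hd]. exists dl. split; [apply cond_pos|].
  intros; apply Hd; auto.
Qed.

(** Along a continuous path (A, B) in the physical domain with a positive
   continuous radius Rr, every coefficient a_j, b_j is continuous: the
   partial derivatives are given by the explicit formulas of
   [StatePartials], built from the continuous functions rho, c, c', u. *)

Section PathContinuity.
Variables (p H : R -> R) (d : nat).
Hypotheses (Hp : pressure_ok p) (HH : H_is_primitive p H).
Variables (A B : R -> R) (s0 : R).
Hypotheses (CA : continuity_pt A s0) (CB : continuity_pt B s0) (SA : forall s, Wdom H (A s) (B s)).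

Lemma cont_half_diff : continuity_pt (fun s => (B s - A s) / 2) s0.
Proof. cont_tac. lra. Qed.
Lemma cont_rho_path : continuity_pt (fun s => Hinv H ((B s - A s) / 2)) s0.
Proof. apply (continuity_pt_comp (fun s => (B s - A s) / 2) (Hinv H)). apply cont_half_diff. apply (Hinv_cont p H Hp HH). apply SA. Qed.
Lemma Hinv_path_pos s : 0 < Hinv H ((B s - A s) / 2).
Proof. apply (Hinv_spec H _ (SA s)). Qed.
Lemma cont_cs_path : continuity_pt (fun s => cs p (Hinv H ((B s - A s) / 2))) s0.
Proof. apply (continuity_pt_comp (fun s => Hinv H ((B s - A s) / 2)) (cs p)). apply cont_rho_path. apply (cs_cont p Hp), Hinv_path_pos. Qed.
Lemma cont_Dcs_path : continuity_pt (fun s => Dcs p (Hinv H ((B s - A s) / 2))) s0.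
Proof. apply (continuity_pt_comp (fun s => Hinv H ((B s - A s) / 2)) (Dcs p)). apply cont_rho_path. apply (Dcs_cont p Hp), Hinv_path_pos. Qed.
Lemma cs_Hinv_path_pos s : 0 < cs p (Hinv H ((B s - A s) / 2)).
Proof. apply (cs_pos p Hp). apply Hinv_path_pos. Qed.
Lemma cont_u_path : continuity_pt (fun s => uW (A s) (B s)) s0.
Proof. unfold uW. cont_tac. lra. Qed.

Lemma hW_path_eq s : hW p H (A s) (B s) = ln (cs p (Hinv H ((B s - A s) / 2)) / Hinv H ((B s - A s) / 2)) / 2.
Proof. unfold hW. rewrite rhoW_Hinv, (Der_H p H HH); auto. apply Hinv_path_pos. Qed.

Lemma cont_hW_path : continuity_pt (fun s => hW p H (A s) (B s)) s0.
Proof.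
  apply continuity_pt_ext with (f := fun s => ln (cs p (Hinv H ((B s - A s) / 2)) / Hinv H ((B s - A s) / 2)) / 2).
  { intro s; symmetry; apply hW_path_eq. }
  apply (cdiv (fun s => ln (cs p (Hinv H ((B s - A s) / 2)) / Hinv H ((B s - A s) / 2))) (fun _ => 2)); [| apply cconst| lra].
  apply (continuity_pt_comp (fun s => cs p (Hinv H ((B s - A s) / 2)) / Hinv H ((B s - A s) / 2)) ln).
  - apply cdiv; [apply cont_cs_path| apply cont_rho_path|]. pose proof (Hinv_path_pos s0); lra.
  - apply derivable_continuous_pt. exists (/ (cs p (Hinv H ((B s0 - A s0) / 2)) / Hinv H ((B s0 - A s0) / 2))).
    apply derivable_pt_lim_ln. apply Rdiv_lt_0_compat; [apply cs_Hinv_path_pos| apply Hinv_path_pos].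
Qed.

Lemma cont_lam1_path : continuity_pt (fun s => lam1 p H (A s) (B s)) s0.
Proof. unfold lam1. apply (cminus (fun s => uW (A s) (B s)) (fun s => cs p (Hinv H ((B s - A s) / 2)))); [apply cont_u_path| apply cont_cs_path]. Qed.
Lemma cont_lam2_path : continuity_pt (fun s => lam2 p H (A s) (B s)) s0.
Proof. unfold lam2. apply (cplus (fun s => uW (A s) (B s)) (fun s => cs p (Hinv H ((B s - A s) / 2)))); [apply cont_u_path| apply cont_cs_path]. Qed.

Variable (Rr : R -> R).
Hypotheses (CR : continuity_pt Rr s0) (RP : forall s, 0 < Rr s).

Lemma cont_fw_path : continuity_pt (fun s => fw p H d (Rr s) (A s) (B s)) s0.
Proof.
  unfold fw.
  apply (cdiv (fun s => (INR d - 1) * uW (A s) (B s) * cs p (rhoW H (A s) (B s))) Rr); auto.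
  - apply (cmult (fun s => (INR d - 1) * uW (A s) (B s)) (fun s => cs p (Hinv H ((B s - A s) / 2)))); [| apply cont_cs_path].
    apply (cmult (fun _ => INR d - 1)); [apply cconst| apply cont_u_path].
  - pose proof (RP s0); lra.
Qed.

Lemma Rr_neq0 s : Rr s <> 0. Proof. pose proof (RP s); lra. Qed.
Lemma Hinv_path_neq0 s : Hinv H ((B s - A s) / 2) <> 0. Proof. pose proof (Hinv_path_pos s); lra. Qed.
Lemma cs_path_neq0 s : cs p (Hinv H ((B s - A s) / 2)) <> 0. Proof. pose proof (cs_Hinv_path_pos s); lra. Qed.

Lemma Rr_sq_neq0 : Rr s0 ^ 2 <> 0. Proof. apply pow_nonzero, Rr_neq0. Qed.

Ltac path_atoms := first [ apply Rr_sq_neq0 | apply cont_rho_path | apply cont_cs_path | apply cont_Dcs_path | apply cont_u_path | apply cont_hW_path | apply cont_lam1_path | apply cont_lam2_path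
   | apply cont_fw_path | apply CR | apply Hinv_path_neq0 | apply cs_path_neq0 | apply Rr_neq0 | lra ].

Lemma cont_D1_lam1_path : continuity_pt (fun s => D1 (lam1 p H) (A s) (B s)) s0.
Proof. eapply continuity_pt_ext. { intro s. symmetry. apply (D1_lam1 p H Hp HH _ _ (SA s)). } cont_tac; path_atoms. Qed.
Lemma cont_D2_lam2_path : continuity_pt (fun s => D2 (lam2 p H) (A s) (B s)) s0.
Proof. eapply continuity_pt_ext. { intro s. symmetry. apply (D2_lam2 p H Hp HH _ _ (SA s)). } cont_tac; path_atoms. Qed.
Lemma cont_D1_hW_path : continuity_pt (fun s => D1 (hW p H) (A s) (B s)) s0.
Proof. eapply continuity_pt_ext. { intro s. symmetry. apply (D1_hW p H Hp HH _ _ (SA s)). } cont_tac; path_atoms. Qed.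
Lemma cont_D2_hW_path : continuity_pt (fun s => D2 (hW p H) (A s) (B s)) s0.
Proof. eapply continuity_pt_ext. { intro s. symmetry. apply (D2_hW p H Hp HH _ _ (SA s)). } cont_tac; path_atoms. Qed.
Lemma cont_D1_fw_path : continuity_pt (fun s => D1 (fw p H d (Rr s)) (A s) (B s)) s0.
Proof. eapply continuity_pt_ext. { intro s. symmetry. apply (D1_fw p H d Hp HH _ _ (SA s) _ (RP s)). } cont_tac; path_atoms. Qed.
Lemma cont_D2_fw_path : continuity_pt (fun s => D2 (fw p H d (Rr s)) (A s) (B s)) s0.
Proof. eapply continuity_pt_ext. { intro s. symmetry. apply (D2_fw p H d Hp HH _ _ (SA s) _ (RP s)). } cont_tac; path_atoms. Qed.
Lemma cont_Dr_fw_path : continuity_pt (fun s => Der (fun x => fw p H d x (A s) (B s)) (Rr s)) s0.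
Proof. eapply continuity_pt_ext. { intro s. symmetry. apply (Dr_fw p H d Hp HH _ _ (SA s) _ (RP s)). } cont_tac; path_atoms. Qed.

Lemma cont_state_path (F : R -> R -> R) : (forall a b, Wdom H a b -> continuity_2d_pt F a b) ->
  continuity_pt (fun s => F (A s) (B s)) s0.
Proof.
  intro HF. apply (cont2_within_comp (fun _ _ => True)); auto. apply c2d_within. apply HF, SA.
Qed.

Variables (g gx gy : R -> R -> R).
Hypothesis Cg : C1_with (Wdom H) g gx gy.

Lemma cont_g_path : continuity_pt (fun s => g (A s) (B s)) s0.
Proof. apply cont_state_path. intros a b W. apply (C1_cont (Wdom H) g gx gy Cg). apply (Wdom_open p H Hp HH); auto. Qed.
Lemma cont_gx_path : continuity_pt (fun s => gx (A s) (B s)) s0.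
Proof. apply cont_state_path. intros a b W. apply (C1_cont_x (Wdom H) g gx gy Cg). apply (Wdom_open p H Hp HH); auto. Qed.
Lemma cont_gy_path : continuity_pt (fun s => gy (A s) (B s)) s0.
Proof. apply cont_state_path. intros a b W. apply (C1_cont_y (Wdom H) g gx gy Cg). apply (Wdom_open p H Hp HH); auto. Qed.

Lemma cont_D1_g_path : continuity_pt (fun s => D1 (fun x y => g x y / Rr s) (A s) (B s)) s0.
Proof.
  eapply continuity_pt_ext. { intro s. symmetry. apply (partials_div_r p H Hp HH _ _ (SA s) _ (RP s) g gx gy Cg). }
  apply cdiv; [apply cont_gx_path| apply CR| apply Rr_neq0].
Qed.
Lemma cont_D2_g_path : continuity_pt (fun s => D2 (fun x y => g x y / Rr s) (A s) (B s)) s0.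
Proof.
  eapply continuity_pt_ext. { intro s. symmetry. apply (partials_div_r p H Hp HH _ _ (SA s) _ (RP s) g gx gy Cg). }
  apply cdiv; [apply cont_gy_path| apply CR| apply Rr_neq0].
Qed.
Lemma cont_Dr_g_path : continuity_pt (fun s => Der (fun x => g (A s) (B s) / x) (Rr s)) s0.
Proof.
  eapply continuity_pt_ext. { intro s. symmetry. apply (partials_div_r p H Hp HH _ _ (SA s) _ (RP s) g gx gy Cg). }
  apply cdiv; [apply copp, cont_g_path| apply cpow, CR| ]. pose proof (RP s0). apply pow_nonzero. lra.
Qed.

Ltac coefficient_atoms := first [ path_atoms | apply cont_D1_lam1_path | apply cont_D2_lam2_path | apply cont_D1_hW_path | apply cont_D2_hW_path | apply cont_D1_fw_path | apply cont_D2_fw_path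
   | apply cont_Dr_fw_path | apply cont_g_path | apply cont_D1_g_path | apply cont_D2_g_path | apply cont_Dr_g_path ].

Lemma cont_a0_path : continuity_pt (fun s => a0W p H (A s) (B s)) s0.
Proof. unfold a0W. cont_tac; coefficient_atoms. Qed.
Lemma cont_a1_path : continuity_pt (fun s => a1W p H d g (Rr s) (A s) (B s)) s0.
Proof. unfold a1W. cont_tac; coefficient_atoms. Qed.
Lemma cont_a2_path : continuity_pt (fun s => a2W p H d g (Rr s) (A s) (B s)) s0.
Proof. unfold a2W. cont_tac; coefficient_atoms. Qed.
Lemma cont_b0_path : continuity_pt (fun s => b0W p H (A s) (B s)) s0.
Proof. unfold b0W. cont_tac; coefficient_atoms. Qed.
Lemma cont_b1_path : continuity_pt (fun s => b1W p H d g (Rr s) (A s) (B s)) s0.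
Proof. unfold b1W. cont_tac; coefficient_atoms. Qed.
Lemma cont_b2_path : continuity_pt (fun s => b2W p H d g (Rr s) (A s) (B s)) s0.
Proof. unfold b2W. cont_tac; coefficient_atoms. Qed.
End PathContinuity.

Lemma Gs_formula p (Hp : pressure_ok p) rho : 0 < rho -> Gs p rho = 1 + Dcs p rho * rho / cs p rho.
Proof.
  intro h. unfold Gs. rewrite (Der_of_lim _ _ (1 * cs p rho + rho * Dcs p rho)).
  - field. pose proof (cs_pos p Hp rho h). lra.
  - apply (dmul (fun s => s) (cs p)). apply did. apply (cs_deriv p Hp); auto.
Qed.

Section CoefficientSigns.
Variables (p H : R -> R).
Hypotheses (Hp : pressure_ok p) (HH : H_is_primitive p H)
  (HG : forall rho, 0 < rho -> 1 < Gs p rho).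

(* d_1 lam1 = d_2 lam2 = G / 2 > 0, hence a0 = - e^{-h} d_1 lam1 < 0 and likewise b0. *)
Lemma a0W_nonpos a b : Wdom H a b -> a0W p H a b <= 0.
Proof.
  intro W. unfold a0W. rewrite (D1_lam1 p H Hp HH _ _ W).
  set (rho := Hinv H ((b - a) / 2)).
  assert (rp : 0 < rho) by apply (Hinv_spec H _ W).
  pose proof (Gs_formula p Hp rho rp) as G. pose proof (HG rho rp). pose proof (cs_pos p Hp rho rp).
  replace ((1 + 0) / 2 - Dcs p rho * (rho / cs p rho * ((0 - 1) / 2))) with (Gs p rho / 2)
    by (rewrite G; field; lra).
  pose proof (exp_pos (- hW p H a b)). nra.
Qed.

Lemma b0W_nonpos a b : Wdom H a b -> b0W p H a b <= 0.
Proof.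
  intro W. unfold b0W. rewrite (D2_lam2 p H Hp HH _ _ W).
  set (rho := Hinv H ((b - a) / 2)).
  assert (rp : 0 < rho) by apply (Hinv_spec H _ W).
  pose proof (Gs_formula p Hp rho rp) as G. pose proof (HG rho rp). pose proof (cs_pos p Hp rho rp).
  replace ((0 + 1) / 2 + Dcs p rho * (rho / cs p rho * ((1 - 0) / 2))) with (Gs p rho / 2)
    by (rewrite G; field; lra).
  pose proof (exp_pos (- hW p H a b)). nra.
Qed.
End CoefficientSigns.

Lemma bound_from_weighted x m c A : 0 < m <= x -> Rabs (x * c) <= A -> Rabs c <= A / m.
Proof.
  intros Hm Hx. rewrite Rabs_mult, (Rabs_right x) in Hx by lra.
  apply Rmult_le_reg_l with m; [lra|]. replace (m * (A / m)) with A by (field; lra).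
  pose proof (Rabs_pos c). nra.
Qed.

Section Characteristic.
Variables (p H : R -> R) (Tcal : R) (w1 w2 : R -> R -> R).
Hypotheses (Hp : pressure_ok p) (HH : H_is_primitive p H).
Hypothesis Hdom : forall t r, Omega Tcal t r -> Wdom H (w1 t r) (w2 t r).
Variables (Fx1 Fy1 Fx2 Fy2 : R -> R -> R).
Hypotheses (C1w1 : C1_with (Omega Tcal) w1 Fx1 Fy1) (C1w2 : C1_with (Omega Tcal) w2 Fx2 Fy2).
Variables (alpha T R0 : R) (lam : R -> R -> R) (X : R -> R).
Hypotheses (Halpha : 0 <= alpha) (HaT : alpha < T) (HTT : T < Tcal).
Hypothesis HX : is_characteristic lam w1 w2 alpha T R0 X.

Let cl := clamp alpha T.

Lemma X_pos s : alpha <= s <= T -> 0 < X s.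
Proof. intro h. apply (proj2 HX s h). Qed.

Lemma X_clamp_cont s : continuity_pt (fun x => X (cl x)) s.
Proof.
  apply clamp_comp_cont; [lra|]. intros t Ht.
  apply (deriv_within_cont X alpha T t (lam (w1 t (X t)) (w2 t (X t)))).
  apply (proj2 HX t Ht).
Qed.

Lemma X_clamp_pos x : 0 < X (cl x).
Proof. apply X_pos, clamp_range. lra. Qed.

Lemma Omega_clamp x : Omega Tcal (cl x) (X (cl x)).
Proof.
  pose proof (clamp_range alpha T x ltac:(lra)). unfold Omega. split; [fold cl in H0; lra|].
  apply X_pos. exact H0.
Qed.

Lemma Wdom_clamp x : Wdom H (w1 (cl x) (X (cl x))) (w2 (cl x) (X (cl x))).
Proof. apply Hdom, Omega_clamp. Qed.

Lemma X_deriv s : alpha < s < T -> derivable_pt_lim X s (lam (w1 s (X s)) (w2 s (X s))).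
Proof.
  intro h. apply (deriv_within_interior (fun s => alpha <= s <= T) _ _ _ (Rmin (s - alpha) (T - s))).
  - apply Rmin_pos; lra.
  - intros y Hy. pose proof (near_interior alpha T s y h Hy). lra.
  - apply (proj2 HX s). lra.
Qed.

Lemma cont_along_clamp (F Fx Fy : R -> R -> R) : C1_with (Omega Tcal) F Fx Fy ->
  forall s, continuity_pt (fun x => F (cl x) (X (cl x))) s.
Proof.
  intros HF s. apply (cont2_within_comp (Omega Tcal) F cl (fun x => X (cl x))).
  - destruct HF as [HP _]. apply (HP _ _ (Omega_clamp s)).
  - apply clamp_cont.
  - apply X_clamp_cont.
  - apply Omega_clamp.
Qed.

Lemma Der_along (F Fx Fy : R -> R -> R) : C1_with (Omega Tcal) F Fx Fy -> forall s, alpha <= s <= T ->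
  Der (fun r => F s r) (X s) = Fy s (X s).
Proof.
  intros HF s hs. apply Der_of_lim. apply (C1_deriv_y_line (Omega Tcal) F Fx Fy HF s (X s) (X s)).
  - apply X_pos; auto.
  - intros v Hv. unfold Omega. split; [lra|]. unfold Rabs in Hv; destruct Rcase_abs; lra.
Qed.

Variables (w Fx Fy Fyx Fyy g gx gy : R -> R -> R) (c0 c1 c2 : R -> R) (A0 A1 A2 m : R).
Hypotheses (Cw : C1_with (Omega Tcal) w Fx Fy) (CFy : C1_with (Omega Tcal) Fy Fyx Fyy)
  (Cg : C1_with (Wdom H) g gx gy).
Hypotheses (C0 : forall s, continuity_pt (fun x => c0 (cl x)) s)
  (C1 : forall s, continuity_pt (fun x => c1 (cl x)) s)
  (C2 : forall s, continuity_pt (fun x => c2 (cl x)) s).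
Hypothesis Hode : forall s, alpha < s < T ->
  let V := fun s => exp (hW p H (w1 s (X s)) (w2 s (X s))) * (Fy s (X s) + g (w1 s (X s)) (w2 s (X s)) / X s) in
  derivable_pt_lim V s (c0 s * V s ^ 2 + c1 s * V s + c2 s).
Hypothesis Hneg : forall s, alpha <= s <= T -> c0 s <= 0.
Hypotheses (HA0 : is_max_on (fun t => Rabs (c0 t)) alpha T A0)
  (HA1 : is_max_on (fun t => Rabs (X t * c1 t)) alpha T A1)
  (HA2 : is_max_on (fun t => Rabs (X t ^ 2 * c2 t)) alpha T A2)
  (HApos : 0 < A0 /\ 0 < A1 /\ 0 < A2) (Hm : is_min_on X alpha T m).

Let V := fun s => exp (hW p H (w1 s (X s)) (w2 s (X s)))
                  * (Der (fun r => w s r) (X s) + g (w1 s (X s)) (w2 s (X s)) / X s).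

Lemma V_eq s : alpha <= s <= T -> V s =
  exp (hW p H (w1 s (X s)) (w2 s (X s))) * (Fy s (X s) + g (w1 s (X s)) (w2 s (X s)) / X s).
Proof. intro Hs. unfold V. rewrite (Der_along w Fx Fy Cw s Hs). reflexivity. Qed.

Lemma V_clamp_cont s : continuity_pt (fun x => V (cl x)) s.
Proof.
  eapply continuity_pt_ext; [intro x; symmetry; apply V_eq, clamp_range; lra|].
  pose proof (cont_along_clamp w1 Fx1 Fy1 C1w1 s) as CA.
  pose proof (cont_along_clamp w2 Fx2 Fy2 C1w2 s) as CB.
  pose proof (cont_hW_path p H Hp HH _ _ s CA CB Wdom_clamp) as Ch.
  pose proof (cont_g_path p H Hp HH _ _ s CA CB Wdom_clamp g gx gy Cg) as Cgp.
  pose proof (cont_along_clamp Fy Fyx Fyy CFy s).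
  pose proof (X_clamp_cont s). pose proof (X_clamp_pos s).
  cont_tac. lra.
Qed.

Theorem riccati_along_characteristic : 0 <= V alpha ->
  forall t, alpha <= t <= T -> t < alpha + xsol A0 A1 A2 / A1 * m ->
  - Kf c2 c1 alpha t / (1 - Kf c2 c1 alpha t *
      Int (fun tau => Rabs (c0 tau) * exp (Int (fun s => Rabs (c1 s)) alpha tau)) alpha t)
    <= V t * exp (- Int c1 alpha t)
  /\ V t * exp (- Int c1 alpha t) <= V alpha + Kf c2 c1 alpha t.
Proof.
  intros HV t Ht Htx. destruct HApos as [P0 [P1 P2]].
  assert (Xm : forall s, alpha <= s <= T -> m <= X s) by (intros; apply Hm; auto).
  assert (mp : 0 < m) by (destruct Hm as [_ [s [Hs E]]]; rewrite <- E; apply X_pos; auto).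
  apply (riccati_bounds_on_interval alpha T t m A0 A1 A2 V c0 c1 c2); try lra; auto.
  - exact V_clamp_cont.
  - intros s Hs. rewrite (V_eq s) by lra.
    apply dlim_local with (e := Rmin (s - alpha) (T - s))
      (f := fun z => exp (hW p H (w1 z (X z)) (w2 z (X z))) * (Fy z (X z) + g (w1 z (X z)) (w2 z (X z)) / X z)).
    + apply Rmin_pos; lra.
    + intros z Hz. pose proof (near_interior alpha T s z Hs Hz). symmetry. apply V_eq. lra.
    + exact (Hode s Hs).
  - intros s Hs. pose proof (Xm s Hs). pose proof (X_pos s Hs).
    split; [apply HA0; auto| split].
    + apply (bound_from_weighted (X s)); [lra| apply HA1; auto].
    + apply (bound_from_weighted (X s ^ 2)); [split; nra| apply HA2; auto].
Qed.
End Characteristic.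

Section Estimates.
Variables (p H : R -> R) (d : nat) (Tcal : R) (w1 w2 : R -> R -> R).
Hypotheses (Hp : pressure_ok p) (HH : H_is_primitive p H)
  (HG : forall rho, 0 < rho -> 1 < Gs p rho).
Variables (Fx1 Fy1 Fx1x Fx1y Fy1x Fy1y Fx2 Fy2 Fx2x Fx2y Fy2x Fy2y : R -> R -> R).
Hypotheses (C1w1 : C1_with (Omega Tcal) w1 Fx1 Fy1) (C1x1 : C1_with (Omega Tcal) Fx1 Fx1x Fx1y)
  (C1y1 : C1_with (Omega Tcal) Fy1 Fy1x Fy1y)
  (C1w2 : C1_with (Omega Tcal) w2 Fx2 Fy2) (C1x2 : C1_with (Omega Tcal) Fx2 Fx2x Fx2y)
  (C1y2 : C1_with (Omega Tcal) Fy2 Fy2x Fy2y).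
Hypothesis Hdom : forall t r, Omega Tcal t r -> Wdom H (w1 t r) (w2 t r).
Hypothesis HPDE : pde_holds p H d Tcal w1 w2.
Variables (alpha T R0 : R) (X : R -> R) (A0 A1 A2 m : R).
Hypotheses (Halpha : 0 <= alpha) (HaT : alpha < T) (HTT : T < Tcal).

Theorem v1_estimate (phi phx phy : R -> R -> R) (Cphi : C1_with (Wdom H) phi phx phy)
  (Hphi2 : forall r a b, 0 < r -> Wdom H a b ->
     D2 (fun x y => exp (hW p H x y) * (phi x y / r)) a b =
     - exp (hW p H a b) * D2 (fw p H d r) a b / (lam1 p H a b - lam2 p H a b))
  (HX : is_characteristic (lam1 p H) w1 w2 alpha T R0 X)
  (HA0 : is_max_on (fun t => Rabs (a0W p H (w1 t (X t)) (w2 t (X t)))) alpha T A0)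
  (HA1 : is_max_on (fun t => Rabs (X t * a1W p H d phi (X t) (w1 t (X t)) (w2 t (X t)))) alpha T A1)
  (HA2 : is_max_on (fun t => Rabs (X t ^ 2 * a2W p H d phi (X t) (w1 t (X t)) (w2 t (X t)))) alpha T A2)
  (HApos : 0 < A0 /\ 0 < A1 /\ 0 < A2) (Hm : is_min_on X alpha T m) :
  0 <= v1 p H phi w1 w2 alpha R0 ->
  forall t, alpha <= t <= T -> t < alpha + xsol A0 A1 A2 / A1 * m ->
  let a0t := fun s => a0W p H (w1 s (X s)) (w2 s (X s)) in
  let a1t := fun s => a1W p H d phi (X s) (w1 s (X s)) (w2 s (X s)) in
  let a2t := fun s => a2W p H d phi (X s) (w1 s (X s)) (w2 s (X s)) in
  let Ka := Kf a2t a1t alpha t in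
  - Ka / (1 - Ka * Int (fun tau => Rabs (a0t tau) *
                         exp (Int (fun s => Rabs (a1t s)) alpha tau)) alpha t)
    <= v1 p H phi w1 w2 t (X t) * exp (- Int a1t alpha t)
  /\ v1 p H phi w1 w2 t (X t) * exp (- Int a1t alpha t)
    <= v1 p H phi w1 w2 alpha R0 + Ka.
Proof.
  intros HV t Ht Htx a0t a1t a2t Ka.
  assert (XR : X alpha = R0) by apply HX. rewrite <- XR in HV |- *.
  pose proof (cont_along_clamp Tcal w1 w2 alpha T R0 (lam1 p H) X Halpha HaT HTT HX) as Cpath.
  pose proof (Wdom_clamp H Tcal w1 w2 Hdom alpha T R0 (lam1 p H) X Halpha HaT HTT HX) as Wpath.
  pose proof (X_clamp_cont w1 w2 alpha T R0 (lam1 p H) X HaT HX) as CX.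
  pose proof (X_clamp_pos w1 w2 alpha T R0 (lam1 p H) X HaT HX) as PX.
  apply (riccati_along_characteristic p H Tcal w1 w2 Hp HH Hdom Fx1 Fy1 Fx2 Fy2 C1w1 C1w2
           alpha T R0 (lam1 p H) X Halpha HaT HTT HX w1 Fx1 Fy1 Fy1x Fy1y phi phx phy a0t a1t a2t
           A0 A1 A2 m C1w1 C1y1 Cphi); auto.
  - intro s. exact (cont_a0_path p H Hp HH _ _ s (Cpath _ _ _ C1w1 s) (Cpath _ _ _ C1w2 s) Wpath).
  - intro s. exact (cont_a1_path p H d Hp HH _ _ s (Cpath _ _ _ C1w1 s) (Cpath _ _ _ C1w2 s) Wpath
                      _ (CX s) PX phi phx phy Cphi).
  - intro s. exact (cont_a2_path p H d Hp HH _ _ s (Cpath _ _ _ C1w1 s) (Cpath _ _ _ C1w2 s) Wpath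
                      _ (CX s) PX phi phx phy Cphi).
  - intros s Hs. apply (riccati_ode_v1 p H d Tcal w1 w2 Hp HH Fx1 Fy1 Fx1x Fx1y Fy1x Fy1y Fx2 Fy2
                          C1w1 C1x1 C1y1 C1w2 Hdom HPDE phi phx phy Cphi Hphi2 X s).
    + split; [split; lra| apply (X_pos w1 w2 alpha T R0 (lam1 p H) X HX); lra].
    + apply (X_deriv w1 w2 alpha T R0 (lam1 p H) X HX s Hs).
  - intros s Hs. apply (a0W_nonpos p H Hp HH HG), Hdom. split; [lra|].
    apply (X_pos w1 w2 alpha T R0 (lam1 p H) X HX); lra.
Qed.

Theorem v2_estimate (psi psx psy : R -> R -> R) (Cpsi : C1_with (Wdom H) psi psx psy)
  (Hpsi2 : forall r a b, 0 < r -> Wdom H a b ->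
     D1 (fun x y => exp (hW p H x y) * (psi x y / r)) a b =
     exp (hW p H a b) * D1 (fw p H d r) a b / (lam2 p H a b - lam1 p H a b))
  (HX : is_characteristic (lam2 p H) w1 w2 alpha T R0 X)
  (HB0 : is_max_on (fun t => Rabs (b0W p H (w1 t (X t)) (w2 t (X t)))) alpha T A0)
  (HB1 : is_max_on (fun t => Rabs (X t * b1W p H d psi (X t) (w1 t (X t)) (w2 t (X t)))) alpha T A1)
  (HB2 : is_max_on (fun t => Rabs (X t ^ 2 * b2W p H d psi (X t) (w1 t (X t)) (w2 t (X t)))) alpha T A2)
  (HBpos : 0 < A0 /\ 0 < A1 /\ 0 < A2) (Hm : is_min_on X alpha T m) :
  0 <= v2 p H psi w1 w2 alpha R0 ->
  forall t, alpha <= t <= T -> t < alpha + xsol A0 A1 A2 / A1 * m ->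
  let b0t := fun s => b0W p H (w1 s (X s)) (w2 s (X s)) in
  let b1t := fun s => b1W p H d psi (X s) (w1 s (X s)) (w2 s (X s)) in
  let b2t := fun s => b2W p H d psi (X s) (w1 s (X s)) (w2 s (X s)) in
  let Kb := Kf b2t b1t alpha t in
  - Kb / (1 - Kb * Int (fun tau => Rabs (b0t tau) *
                         exp (Int (fun s => Rabs (b1t s)) alpha tau)) alpha t)
    <= v2 p H psi w1 w2 t (X t) * exp (- Int b1t alpha t)
  /\ v2 p H psi w1 w2 t (X t) * exp (- Int b1t alpha t)
    <= v2 p H psi w1 w2 alpha R0 + Kb.
Proof.
  intros HV t Ht Htx b0t b1t b2t Kb.
  assert (XR : X alpha = R0) by apply HX. rewrite <- XR in HV |- *.
  pose proof (cont_along_clamp Tcal w1 w2 alpha T R0 (lam2 p H) X Halpha HaT HTT HX) as Cpath.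
  pose proof (Wdom_clamp H Tcal w1 w2 Hdom alpha T R0 (lam2 p H) X Halpha HaT HTT HX) as Wpath.
  pose proof (X_clamp_cont w1 w2 alpha T R0 (lam2 p H) X HaT HX) as CX.
  pose proof (X_clamp_pos w1 w2 alpha T R0 (lam2 p H) X HaT HX) as PX.
  apply (riccati_along_characteristic p H Tcal w1 w2 Hp HH Hdom Fx1 Fy1 Fx2 Fy2 C1w1 C1w2
           alpha T R0 (lam2 p H) X Halpha HaT HTT HX w2 Fx2 Fy2 Fy2x Fy2y psi psx psy b0t b1t b2t
           A0 A1 A2 m C1w2 C1y2 Cpsi); auto.
  - intro s. exact (cont_b0_path p H Hp HH _ _ s (Cpath _ _ _ C1w1 s) (Cpath _ _ _ C1w2 s) Wpath).
  - intro s. exact (cont_b1_path p H d Hp HH _ _ s (Cpath _ _ _ C1w1 s) (Cpath _ _ _ C1w2 s) Wpath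
                      _ (CX s) PX psi psx psy Cpsi).
  - intro s. exact (cont_b2_path p H d Hp HH _ _ s (Cpath _ _ _ C1w1 s) (Cpath _ _ _ C1w2 s) Wpath
                      _ (CX s) PX psi psx psy Cpsi).
  - intros s Hs. apply (riccati_ode_v2 p H d Tcal w1 w2 Hp HH Fx1 Fy1 Fx2 Fy2 Fx2x Fx2y Fy2x Fy2y
                          C1w1 C1w2 C1x2 C1y2 Hdom HPDE psi psx psy Cpsi Hpsi2 X s).
    + split; [split; lra| apply (X_pos w1 w2 alpha T R0 (lam2 p H) X HX); lra].
    + apply (X_deriv w1 w2 alpha T R0 (lam2 p H) X HX s Hs).
  - intros s Hs. apply (b0W_nonpos p H Hp HH HG), Hdom. split; [lra|].
    apply (X_pos w1 w2 alpha T R0 (lam2 p H) X HX); lra.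
Qed.
End Estimates.

Theorem lemma4p5
  (p H : R -> R) (d : nat) (phi psi : R -> R -> R)
  (Tcal : R) (w1 w2 : R -> R -> R)
  (alpha T R0 : R) (X1 X2 : R -> R)
  (A0 A1 A2 B0 B1 B2 m1 m2 : R)
  (Hp : pressure_ok p)
  (HG : forall rho, 0 < rho -> 1 < Gs p rho < 2)
  (HH : H_is_primitive p H)
  (Hphi : phi_ok p H d phi)
  (Hpsi : psi_ok p H d psi)
  (Hsol : is_solution p H d Tcal w1 w2)
  (Halpha : 0 <= alpha) (HaT : alpha < T) (HTT : T < Tcal) (HR : 0 < R0)
  (HX1 : is_characteristic (lam1 p H) w1 w2 alpha T R0 X1)
  (HX2 : is_characteristic (lam2 p H) w1 w2 alpha T R0 X2)
  (HA0 : is_max_on (fun t => Rabs (a0W p H (w1 t (X1 t)) (w2 t (X1 t)))) alpha T A0)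
  (HA1 : is_max_on (fun t => Rabs (X1 t * a1W p H d phi (X1 t) (w1 t (X1 t)) (w2 t (X1 t)))) alpha T A1)
  (HA2 : is_max_on (fun t => Rabs (X1 t ^ 2 * a2W p H d phi (X1 t) (w1 t (X1 t)) (w2 t (X1 t)))) alpha T A2)
  (HB0 : is_max_on (fun t => Rabs (b0W p H (w1 t (X2 t)) (w2 t (X2 t)))) alpha T B0)
  (HB1 : is_max_on (fun t => Rabs (X2 t * b1W p H d psi (X2 t) (w1 t (X2 t)) (w2 t (X2 t)))) alpha T B1)
  (HB2 : is_max_on (fun t => Rabs (X2 t ^ 2 * b2W p H d psi (X2 t) (w1 t (X2 t)) (w2 t (X2 t)))) alpha T B2)
  (HApos : 0 < A0 /\ 0 < A1 /\ 0 < A2)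
  (HBpos : 0 < B0 /\ 0 < B1 /\ 0 < B2)
  (Hm1 : is_min_on X1 alpha T m1)
  (Hm2 : is_min_on X2 alpha T m2) :
  (0 <= v1 p H phi w1 w2 alpha R0 ->
   forall t, alpha <= t <= T ->
   t < alpha + xsol A0 A1 A2 / A1 * m1 ->
   let a0t := fun s => a0W p H (w1 s (X1 s)) (w2 s (X1 s)) in
   let a1t := fun s => a1W p H d phi (X1 s) (w1 s (X1 s)) (w2 s (X1 s)) in
   let a2t := fun s => a2W p H d phi (X1 s) (w1 s (X1 s)) (w2 s (X1 s)) in
   let Ka := Kf a2t a1t alpha t in
   - Ka / (1 - Ka * Int (fun tau => Rabs (a0t tau) *
                          exp (Int (fun s => Rabs (a1t s)) alpha tau)) alpha t)
     <= v1 p H phi w1 w2 t (X1 t) * exp (- Int a1t alpha t)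
   /\ v1 p H phi w1 w2 t (X1 t) * exp (- Int a1t alpha t)
     <= v1 p H phi w1 w2 alpha R0 + Ka)
  /\
  (0 <= v2 p H psi w1 w2 alpha R0 ->
   forall t, alpha <= t <= T ->
   t < alpha + xsol B0 B1 B2 / B1 * m2 ->
   let b0t := fun s => b0W p H (w1 s (X2 s)) (w2 s (X2 s)) in
   let b1t := fun s => b1W p H d psi (X2 s) (w1 s (X2 s)) (w2 s (X2 s)) in
   let b2t := fun s => b2W p H d psi (X2 s) (w1 s (X2 s)) (w2 s (X2 s)) in
   let Kb := Kf b2t b1t alpha t in
   - Kb / (1 - Kb * Int (fun tau => Rabs (b0t tau) *
                          exp (Int (fun s => Rabs (b1t s)) alpha tau)) alpha t)
     <= v2 p H psi w1 w2 t (X2 t) * exp (- Int b1t alpha t)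
   /\ v2 p H psi w1 w2 t (X2 t) * exp (- Int b1t alpha t)
     <= v2 p H psi w1 w2 alpha R0 + Kb).
Proof.
  destruct Hsol as [C2w1 [C2w2 [Hdom HPDE]]].
  destruct (C2_on_C1_with _ _ C2w1) as [Fx1 [Fy1 [Fx1x [Fx1y [Fy1x [Fy1y [C1w1 [C1x1 C1y1]]]]]]]].
  destruct (C2_on_C1_with _ _ C2w2) as [Fx2 [Fy2 [Fx2x [Fx2y [Fy2x [Fy2y [C1w2 [C1x2 C1y2]]]]]]]].
  destruct Hphi as [[phx [phy Cphi]] Hphi2].
  destruct Hpsi as [[psx [psy Cpsi]] Hpsi2].
  assert (HG1 : forall rho, 0 < rho -> 1 < Gs p rho) by (intros rho h; apply (HG rho h)).
  split.
  - exact (v1_estimate p H d Tcal w1 w2 Hp HH HG1 Fx1 Fy1 Fx1x Fx1y Fy1x Fy1y Fx2 Fy2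
             C1w1 C1x1 C1y1 C1w2 Hdom HPDE alpha T R0 X1 A0 A1 A2 m1 Halpha HaT HTT
             phi phx phy Cphi Hphi2 HX1 HA0 HA1 HA2 HApos Hm1).
  - exact (v2_estimate p H d Tcal w1 w2 Hp HH HG1 Fx1 Fy1 Fx2 Fy2 Fx2x Fx2y Fy2x Fy2y
             C1w1 C1w2 C1x2 C1y2 Hdom HPDE alpha T R0 X2 B0 B1 B2 m2 Halpha HaT HTT
             psi psx psy Cpsi Hpsi2 HX2 HB0 HB1 HB2 HBpos Hm2).
Qed.
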